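(* Let $\alpha=(\alpha_k)_{k\in\mathbb{N}}\in\ell^2$ and for $n\in\mathbb{N}$ let $J_n=\sup_{m\ge n}(m+1-n)^{1/2}\big(\sum_{k=m}^\infty|\alpha_k|^2\big)^{1/2}$. Then $$\lim_{n\to\infty}J_n\le\|R_\alpha\|_e\le2\sqrt2\lim_{n\to\infty}J_n.$$ In particular, $R_\alpha$ is compact if and only if $\lim_{n\to\infty}J_n=0$.
   Context: $\mathbb{N}=\{0,1,2,\dots\}$; $\ell^2$ is the space of square-summable functions $\mathbb{N}\to\mathbb{C}$. The Rhaly operator is $(R_\alpha f)(k)=\alpha_k\sum_{j=0}^k f(j)$. The sequence $(J_n)$ is nonincreasing, so its limit exists in $[0,\infty]$. The essential norm is $\|T\|_e=\inf\{\|T-P\|: P \text{ a finite-rank operator on }\ell^2\}$, where $\|\cdot\|$ is the operator norm (possibly $+\infty$). *)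

From Stdlib Require Import Reals.
From Coquelicot Require Import Coquelicot.
Open Scope R_scope.

Definition seqC := nat -> C.

Definition l2 (f : seqC) : Prop := ex_series (fun k => Cmod (f k) ^ 2).

(* the l^2 norm (meaningful for f in l^2) *)
Definition l2norm (f : seqC) : R := sqrt (Series (fun k => Cmod (f k) ^ 2)).

Definition seq_sub (f g : seqC) : seqC := fun k => Cminus (f k) (g k).
Definition seq_add (f g : seqC) : seqC := fun k => Cplus (f k) (g k).
Definition seq_scal (a : C) (f : seqC) : seqC := fun k => Cmult a (f k).

(* operators are maps on sequences, only considered on inputs from l^2 *)
Definition op := seqC -> seqC.
Definition op_sub (T P : op) : op := fun f => seq_sub (T f) (P f).

Definition op_bounded_by (T : op) (M : R) : Prop :=
  forall f, l2 f -> l2 (T f) /\ l2norm (T f) <= M * l2norm f.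

(* operator norm on l^2, in [0, +oo] (= +oo if T is not a bounded map l^2 -> l^2) *)
Definition opnorm (T : op) : Rbar := Glb_Rbar (fun M => op_bounded_by T M).

Definition op_linear (P : op) : Prop :=
  forall (a : C) f g, l2 f -> l2 g ->
    P (seq_add (seq_scal a f) g) = seq_add (seq_scal a (P f)) (P g).

Definition finite_rank (P : op) : Prop :=
  op_linear P /\ (exists M, op_bounded_by P M) /\
  exists (n : nat) (v : nat -> seqC), (forall i, l2 (v i)) /\
    forall f, l2 f -> exists c : nat -> C,
      P f = (fun k => sum_n (fun i => Cmult (c i) (v i k)) n).

Definition ess_norm (T : op) : Rbar :=
  Rbar_glb (fun x => exists P, finite_rank P /\ x = opnorm (op_sub T P)).

Definition compact_op (T : op) : Prop :=
  (forall f, l2 f -> l2 (T f)) /\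
  forall (u : nat -> seqC) (B : R), (forall j, l2 (u j) /\ l2norm (u j) <= B) ->
    exists (phi : nat -> nat) (g : seqC),
      (forall j, (phi j < phi (S j))%nat) /\ l2 g /\
      is_lim_seq (fun j => l2norm (seq_sub (T (u (phi j))) g)) 0.

Definition rhaly (alpha : seqC) : op :=
  fun f k => Cmult (alpha k) (sum_n f k).

Definition tail2 (alpha : seqC) (m : nat) : R :=
  Series (fun k => Cmod (alpha (m + k)%nat) ^ 2).

Definition J (alpha : seqC) (n : nat) : Rbar :=
  Lub_Rbar (fun x => exists m, (n <= m)%nat /\
    x = sqrt (INR (m + 1 - n)) * sqrt (tail2 alpha m)).

(* lim_n J_n: J is nonincreasing, so its limit is its infimum *)
Definition Jlim (alpha : seqC) : Rbar := Rbar_glb (fun x => exists n, x = J alpha n).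

(* Upper bound: write [R_alpha = P_n + D_n] with [P_n f = R_alpha (f 1_[0,n))], of rank at
   most [n + 1].  [D_n f] only involves [f n, f (n+1), ...], and the discrete Hardy inequality
   [sum_k w_k (sum_(i<=k) a_i)^2 <= 4 B sum_i a_i^2], valid when [(m+1) sum_(k>=m) w_k <= B],
   gives [||D_n|| <= 2 J_n].  Hence [||R_alpha||_e <= 2 lim J_n], better than [2 sqrt 2].

   Lower bound: the normalised indicator [u] of [[n, m]] satisfies
   [||R_alpha u||^2 >= (m+1-n) sum_(k>=m) |alpha_k|^2], so for [L < lim J_n] there are blocks,
   arbitrarily far apart, with [||R_alpha u|| > L].  For two far-apart blocks [||u - u'||^2 = 2]
   while [||R_alpha (u - u')||^2] is nearly [||R_alpha u||^2 + ||R_alpha u'||^2 > 2 L^2].  If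
   [||R_alpha - Q|| <= M < L] and [Q] maps bounded sequences to sequences with Cauchy
   subsequences, some such pair has [Q (u - u')] negligible, which is impossible.  Finite-rank
   operators have this property (Gram-Schmidt, then Bolzano-Weierstrass on the coordinates),
   and so does [R_alpha] when compact; hence [lim J_n <= ||R_alpha||_e], and [lim J_n = 0]
   for compact [R_alpha].

   Conversely, if [lim J_n = 0], a diagonal extraction gives coordinatewise convergent
   subsequences of bounded sequences, and the splitting [R_alpha = P_n + D_n] turns
   coordinatewise convergence into norm convergence of their images. *)

From Stdlib Require Import Reals.
From Coquelicot Require Import Coquelicot.
From Stdlib Require Import Lra Lia FunctionalExtensionality Classical IndefiniteDescription.
Open Scope R_scope.

(* Coquelicot's [sum_n] lemmas live over [AbelianMonoid.sort R_AbelianMonoid], where [ring]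
   and [lra] fail; these copies are stated at [@eq R]. *)
Lemma sum_nS (a : nat -> R) n : @eq R (sum_n a (S n)) (sum_n a n + a (S n)).
Proof. exact (sum_Sn a n). Qed.

Lemma sum_n0 (a : nat -> R) : @eq R (sum_n a 0) (a 0%nat).
Proof. exact (sum_O a). Qed.

Lemma sum_n_plusR (a b : nat -> R) n :
  @eq R (sum_n (fun k => a k + b k) n) (sum_n a n + sum_n b n).
Proof. exact (sum_n_plus a b n). Qed.

Lemma sum_n_scalR (c : R) (a : nat -> R) n : @eq R (sum_n (fun k => c * a k) n) (c * sum_n a n).
Proof. exact (sum_n_mult_l c a n). Qed.

Lemma sum_n_extR (a b : nat -> R) n :
  (forall k, (k <= n)%nat -> a k = b k) -> @eq R (sum_n a n) (sum_n b n).
Proof. exact (sum_n_ext_loc a b n). Qed.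

Lemma sum_n_le (a b : nat -> R) n :
  (forall k, (k <= n)%nat -> a k <= b k) -> sum_n a n <= sum_n b n.
Proof.
  induction n; intros H; [rewrite !sum_n0; apply H; lia|].
  rewrite !sum_nS. apply Rplus_le_compat; [apply IHn; intros|]; apply H; lia.
Qed.

Lemma sum_n_nonneg (a : nat -> R) n : (forall k, (k <= n)%nat -> 0 <= a k) -> 0 <= sum_n a n.
Proof.
  intros H. apply Rle_trans with (sum_n (fun _ => 0) n); [rewrite sum_n_const; lra|].
  apply sum_n_le. exact H.
Qed.

Lemma sum_n_zero (a : nat -> R) n : (forall k, (k <= n)%nat -> a k = 0) -> @eq R (sum_n a n) 0.
Proof.
  intros H. rewrite (sum_n_ext_loc a (fun _ => 0)) by exact H. rewrite sum_n_const. ring.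
Qed.

Lemma sum_n_le_widen (a : nat -> R) n m :
  (forall k, 0 <= a k) -> (n <= m)%nat -> sum_n a n <= sum_n a m.
Proof. intros H Hnm. induction Hnm; [lra|]. rewrite sum_nS. specialize (H (S m)). lra. Qed.

Lemma term_le_sum_n (a : nat -> R) k : (forall j, 0 <= a j) -> a k <= sum_n a k.
Proof.
  intros H. destruct k; [rewrite sum_n0; lra|].
  rewrite sum_nS. pose proof (sum_n_nonneg a k (fun j _ => H j)). lra.
Qed.

Lemma sum_n_single (t : nat -> R) N p : (p <= N)%nat ->
  (forall i, (i <= N)%nat -> i <> p -> t i = 0) -> @eq R (sum_n t N) (t p).
Proof.
  intros Hp H. induction N.
  - replace p with 0%nat by lia. apply sum_n0.
  - destruct (Nat.eq_dec p (S N)) as [->|Hne].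
    + rewrite sum_nS, sum_n_zero by (intros; apply H; lia). ring.
    + rewrite sum_nS, IHN, (H (S N)) by (lia || intros; apply H; lia). ring.
Qed.

Lemma sum_n_shift (g : nat -> R) n i : (forall j, (j < n)%nat -> g j = 0) ->
  @eq R (sum_n g (n + i)) (sum_n (fun i' => g (n + i')%nat) i).
Proof.
  intros H. induction i.
  - rewrite sum_n0, Nat.add_0_r. destruct n; [apply sum_n0|].
    rewrite sum_nS, sum_n_zero by (intros; apply H; lia). ring.
  - rewrite Nat.add_succ_r, !sum_nS, IHi, Nat.add_succ_r. reflexivity.
Qed.

Lemma sum_n_shift_le (g : nat -> R) n i : (forall j, 0 <= g j) ->
  sum_n (fun i' => g (n + i')%nat) i <= sum_n g (n + i).
Proof.
  intros H. set (g0 := fun j => if (j <? n)%nat then 0 else g j).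
  rewrite (sum_n_ext_loc _ (fun i' => g0 (n + i')%nat)).
  - rewrite <- sum_n_shift.
    + apply sum_n_le. intros k _. unfold g0. destruct (k <? n)%nat; [apply H | lra].
    + intros j Hj. unfold g0. destruct (Nat.ltb_spec j n); [reflexivity | lia].
  - intros k _. unfold g0. destruct (Nat.ltb_spec (n + k) n); [lia | reflexivity].
Qed.

Lemma sum_n_le_Series (s : nat -> R) N :
  (forall k, 0 <= s k) -> ex_series s -> sum_n s N <= Series s.
Proof.
  intros Hp He. apply (is_lim_seq_incr_compare (sum_n s)); [apply Series_correct, He|].
  intros n. rewrite sum_nS. specialize (Hp (S n)). lra.
Qed.

Lemma ex_series_of_bounded_sum_n (s : nat -> R) B : (forall k, 0 <= s k) ->
  (forall N, sum_n s N <= B) -> ex_series s /\ Series s <= B.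
Proof.
  intros Hp HB.
  assert (Hinc : forall n, sum_n s n <= sum_n s (S n)).
  { intros n. rewrite sum_nS. specialize (Hp (S n)). lra. }
  destruct (ex_finite_lim_seq_incr _ B Hinc HB) as [l Hl].
  split; [exists l; exact Hl|].
  unfold Series. rewrite (is_lim_seq_unique _ _ Hl).
  assert (Hle : Rbar_le l B) by (apply (is_lim_seq_le _ (fun _ => B) l B HB Hl), is_lim_seq_const).
  exact Hle.
Qed.

Lemma Series_ge_0 (s : nat -> R) : (forall k, 0 <= s k) -> ex_series s -> 0 <= Series s.
Proof.
  intros H He. apply Rle_trans with (sum_n s 0); [rewrite sum_n0; auto|]. apply sum_n_le_Series; auto.
Qed.

Lemma Series_le_ex (a b : nat -> R) :
  (forall k, a k <= b k) -> ex_series a -> ex_series b -> Series a <= Series b.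
Proof.
  intros H Ha Hb.
  assert (Hle : Rbar_le (Series a) (Series b)).
  { apply (is_lim_seq_le (sum_n a) (sum_n b)); [intros; apply sum_n_le; auto|..];
      apply Series_correct; assumption. }
  exact Hle.
Qed.

Lemma ex_series_le_nonneg (a b : nat -> R) :
  (forall k, 0 <= a k <= b k) -> ex_series b -> ex_series a.
Proof.
  intros H Hb. apply (ex_series_le a b); auto. intros n.
  change (norm (a n)) with (Rabs (a n)). rewrite Rabs_pos_eq; apply H.
Qed.

Lemma Series_0 : ex_series (fun _ => 0) /\ Series (fun _ => 0) = 0.
Proof.
  destruct (ex_series_of_bounded_sum_n (fun _ => 0) 0) as [H1 H2].
  - intros; lra.
  - intros; rewrite sum_n_zero; auto; lra.
  - split; [exact H1|]. pose proof (Series_ge_0 (fun _ => 0) (fun _ => Rle_refl 0) H1). lra.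
Qed.

Lemma Series_nonneg_eq_0 (s : nat -> R) :
  (forall k, 0 <= s k) -> ex_series s -> Series s = 0 -> forall k, s k = 0.
Proof.
  intros Hp He H0 k. pose proof (sum_n_le_Series s k Hp He).
  pose proof (term_le_sum_n s k Hp). specialize (Hp k). lra.
Qed.

Lemma ex_series_sum_n (h : nat -> nat -> R) K : (forall l, ex_series (h l)) ->
  ex_series (fun k => sum_n (fun l => h l k) K).
Proof.
  intros H. induction K.
  - eapply ex_series_ext; [|apply (H 0%nat)]. intros n. rewrite sum_n0. reflexivity.
  - eapply ex_series_ext; [|apply (ex_series_plus _ _ IHK (H (S K)))].
    intros n. rewrite sum_nS. reflexivity.
Qed.

Lemma Series_sum_n (h : nat -> nat -> R) K : (forall l, ex_series (h l)) ->
  Series (fun k => sum_n (fun l => h l k) K) = sum_n (fun l => Series (h l)) K.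
Proof.
  intros H. induction K.
  - rewrite sum_n0. apply Series_ext. intros; apply sum_n0.
  - rewrite sum_nS, <- IHK, <- Series_plus by auto using ex_series_sum_n.
    apply Series_ext. intros; apply sum_nS.
Qed.

Lemma Series_split (a : nat -> R) N :
  ex_series a -> Series a = sum_n a N + Series (fun k => a (S N + k)%nat).
Proof.
  intros H. rewrite (Series_incr_n a (S N)) by (lia || exact H).
  rewrite sum_n_Reals. reflexivity.
Qed.

Lemma Series_cut (s : nat -> R) N :
  Series (fun k => if (k <? N)%nat then 0 else s k) = Series (fun k => s (N + k)%nat).
Proof.
  rewrite (Series_incr_n_aux _ N).
  - apply Series_ext. intros k. destruct (Nat.ltb_spec (N + k) N); [lia | reflexivity].
  - intros k Hk. destruct (Nat.ltb_spec k N); [reflexivity | lia].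
Qed.

Lemma ex_series_cut (s : nat -> R) N :
  ex_series s -> ex_series (fun k => if (k <? N)%nat then 0 else s k).
Proof.
  intros H. apply (ex_series_incr_n _ N). apply (ex_series_incr_n _ N) in H.
  eapply ex_series_ext; [|apply H]. intros k. destruct (Nat.ltb_spec (N + k) N); [lia | reflexivity].
Qed.

Definition Cnorm2 (z : C) : R := fst z ^ 2 + snd z ^ 2.

Lemma C_ext (z w : C) : fst z = fst w -> snd z = snd w -> z = w.
Proof. destruct z, w; simpl; intros; subst; reflexivity. Qed.

Lemma Cmod_pow2 z : Cmod z ^ 2 = Cnorm2 z.
Proof. unfold Cmod, Cnorm2. rewrite pow2_sqrt; [reflexivity | nra]. Qed.

Lemma Cnorm2_ge_0 z : 0 <= Cnorm2 z.
Proof. unfold Cnorm2; nra. Qed.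

Lemma Cnorm2_0 : Cnorm2 (RtoC 0) = 0.
Proof. unfold Cnorm2; simpl; ring. Qed.

Lemma Cnorm2_mult x y : Cnorm2 (Cmult x y) = Cnorm2 x * Cnorm2 y.
Proof. destruct x as [a b], y as [c d]; unfold Cnorm2; simpl. ring. Qed.

Lemma Cnorm2_sub_sym x y : Cnorm2 (Cminus x y) = Cnorm2 (Cminus y x).
Proof. destruct x as [a b], y as [c d]; unfold Cnorm2, Cminus, Copp, Cplus; simpl. ring. Qed.

Lemma Cnorm2_add_le x y : Cnorm2 (Cplus x y) <= 2 * Cnorm2 x + 2 * Cnorm2 y.
Proof.
  destruct x as [a b], y as [c d]; unfold Cnorm2; simpl.
  pose proof (pow2_ge_0 (a - c)); pose proof (pow2_ge_0 (b - d)). nra.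
Qed.

Lemma Cnorm2_sub_le x y : Cnorm2 (Cminus x y) <= 2 * Cnorm2 x + 2 * Cnorm2 y.
Proof.
  destruct x as [a b], y as [c d]; unfold Cnorm2, Cminus, Copp, Cplus; simpl.
  pose proof (pow2_ge_0 (a + c)); pose proof (pow2_ge_0 (b + d)). nra.
Qed.

Lemma Cnorm2_add_le_eps x y eta :
  0 < eta -> Cnorm2 (Cplus x y) <= (1 + eta) * Cnorm2 x + (1 + / eta) * Cnorm2 y.
Proof.
  intros He. destruct x as [a b], y as [c d]; unfold Cnorm2; simpl.
  assert (Hsq : forall u v, (u + v) ^ 2 <= (1 + eta) * u ^ 2 + (1 + / eta) * v ^ 2).
  { intros u v.
    assert (0 <= (eta * u - v) ^ 2 / eta) by (apply Rdiv_le_0_compat; [apply pow2_ge_0 | lra]).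
    assert ((eta * u - v) ^ 2 / eta = eta * u ^ 2 - 2 * u * v + / eta * v ^ 2) by (field; lra).
    nra. }
  pose proof (Hsq a c); pose proof (Hsq b d). lra.
Qed.

Lemma Cnorm2_sub_ge_eps x y eta :
  0 < eta -> (1 - eta) * Cnorm2 y - (1 + / eta) * Cnorm2 x <= Cnorm2 (Cminus x y).
Proof.
  intros He. pose proof (Cnorm2_add_le_eps (Cminus y x) x eta He) as H.
  replace (Cplus (Cminus y x) x) with y in H by (apply C_ext; simpl; ring).
  rewrite Cnorm2_sub_sym in H.
  set (a := Cnorm2 (Cminus x y)) in *; set (b := Cnorm2 x) in *; set (c := Cnorm2 y) in *.
  assert (0 <= a) by apply Cnorm2_ge_0; assert (0 <= b) by apply Cnorm2_ge_0.
  assert (0 <= c) by apply Cnorm2_ge_0; assert (0 < / eta) by (apply Rinv_0_lt_compat; auto).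
  assert (0 <= (1 + / eta) * b) by (apply Rmult_le_pos; lra).
  destruct (Rle_dec eta 1).
  - assert ((1 - eta) * c <= (1 - eta) * ((1 + eta) * a + (1 + / eta) * b))
      by (apply Rmult_le_compat_l; lra).
    assert (0 <= eta * eta * a) by (apply Rmult_le_pos; nra).
    assert (0 <= eta * ((1 + / eta) * b)) by (apply Rmult_le_pos; lra).
    nra.
  - assert ((1 - eta) * c <= 0) by (apply Rmult_le_0_r; lra). lra.
Qed.

Lemma fst_sum_n (f : nat -> C) n : fst (sum_n f n) = sum_n (fun j => fst (f j)) n.
Proof. induction n; [reflexivity|]. rewrite sum_Sn, sum_nS, <- IHn. reflexivity. Qed.

Lemma snd_sum_n (f : nat -> C) n : snd (sum_n f n) = sum_n (fun j => snd (f j)) n.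
Proof. induction n; [reflexivity|]. rewrite sum_Sn, sum_nS, <- IHn. reflexivity. Qed.

Lemma sum_n_Cminus (f g : nat -> C) k :
  sum_n (fun j => Cminus (f j) (g j)) k = Cminus (sum_n f k) (sum_n g k).
Proof.
  induction k; [rewrite !sum_O; reflexivity|].
  rewrite !sum_Sn, IHk. apply C_ext; simpl; ring.
Qed.

Lemma sum_n_Cplus_scal (a : C) (f g : nat -> C) k :
  sum_n (fun j => Cplus (Cmult a (f j)) (g j)) k = Cplus (Cmult a (sum_n f k)) (sum_n g k).
Proof.
  induction k; [rewrite !sum_O; reflexivity|].
  rewrite !sum_Sn, IHk. apply C_ext; simpl; ring.
Qed.

Lemma sumC_zero (g : nat -> C) k :
  (forall j, (j <= k)%nat -> g j = RtoC 0) -> sum_n g k = RtoC 0.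
Proof.
  intros H. apply C_ext; rewrite ?fst_sum_n, ?snd_sum_n; apply sum_n_zero; intros; rewrite H; auto.
Qed.

Lemma sumC_single (t : nat -> C) N p : (p <= N)%nat ->
  (forall i, (i <= N)%nat -> i <> p -> t i = RtoC 0) -> sum_n t N = t p.
Proof.
  intros Hp H. apply C_ext; rewrite ?fst_sum_n, ?snd_sum_n; apply (sum_n_single (fun j => _ (t j)));
    auto; intros; rewrite H; auto.
Qed.

Lemma sumC_shift (g : nat -> C) n i : (forall j, (j < n)%nat -> g j = RtoC 0) ->
  sum_n g (n + i) = sum_n (fun i' => g (n + i')%nat) i.
Proof.
  intros H. apply C_ext; rewrite ?fst_sum_n, ?snd_sum_n; apply sum_n_shift; intros; rewrite H; auto.
Qed.

Lemma Cmod_sum_n_le (f : nat -> C) n : Cmod (sum_n f n) <= sum_n (fun j => Cmod (f j)) n.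
Proof.
  induction n; [rewrite sum_O, sum_n0; lra|].
  rewrite sum_Sn, sum_nS. eapply Rle_trans; [apply Cmod_triangle|]. apply Rplus_le_compat_r, IHn.
Qed.

Lemma Cnorm2_sum_n_le (f : nat -> C) n :
  Cnorm2 (sum_n f n) <= (sum_n (fun j => Cmod (f j)) n) ^ 2.
Proof. rewrite <- Cmod_pow2. apply pow_incr. split; [apply Cmod_ge_0 | apply Cmod_sum_n_le]. Qed.

Definition sqnorm (f : seqC) : R := Series (fun k => Cmod (f k) ^ 2).

Lemma l2_Cnorm2 f : l2 f <-> ex_series (fun k => Cnorm2 (f k)).
Proof. unfold l2. split; apply ex_series_ext; intros; rewrite Cmod_pow2; reflexivity. Qed.

Lemma sqnorm_Cnorm2 f : sqnorm f = Series (fun k => Cnorm2 (f k)).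
Proof. apply Series_ext. intros; apply Cmod_pow2. Qed.

Lemma sqnorm_ext f g : (forall k, f k = g k) -> sqnorm f = sqnorm g.
Proof. intros H. apply Series_ext. intros; rewrite H; reflexivity. Qed.

Lemma sqnorm_ge_0 f : l2 f -> 0 <= sqnorm f.
Proof.
  intros H. rewrite sqnorm_Cnorm2. apply Series_ge_0; [intros; apply Cnorm2_ge_0 | apply l2_Cnorm2, H].
Qed.

Lemma sum_n_le_sqnorm f K : l2 f -> sum_n (fun k => Cnorm2 (f k)) K <= sqnorm f.
Proof.
  intros H. rewrite sqnorm_Cnorm2. apply sum_n_le_Series; [intros; apply Cnorm2_ge_0 | apply l2_Cnorm2, H].
Qed.

Lemma Cnorm2_le_sqnorm f k : l2 f -> Cnorm2 (f k) <= sqnorm f.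
Proof.
  intros H. eapply Rle_trans; [|apply (sum_n_le_sqnorm f k H)].
  apply (term_le_sum_n (fun j => Cnorm2 (f j))). intros; apply Cnorm2_ge_0.
Qed.

Lemma l2_of_bounded_sum_n f B :
  (forall K, sum_n (fun k => Cnorm2 (f k)) K <= B) -> l2 f /\ sqnorm f <= B.
Proof.
  intros H. destruct (ex_series_of_bounded_sum_n _ B (fun k => Cnorm2_ge_0 (f k)) H) as [H1 H2].
  split; [apply l2_Cnorm2, H1 | rewrite sqnorm_Cnorm2; exact H2].
Qed.

Lemma l2_le2 f g h c : (forall k, Cnorm2 (f k) <= c * Cnorm2 (g k) + c * Cnorm2 (h k)) ->
  l2 g -> l2 h -> l2 f.
Proof.
  intros H Hg Hh. apply l2_Cnorm2. apply l2_Cnorm2 in Hg. apply l2_Cnorm2 in Hh.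
  apply (ex_series_le_nonneg _ (fun k => c * Cnorm2 (g k) + c * Cnorm2 (h k))).
  - intros; split; [apply Cnorm2_ge_0 | auto].
  - apply (ex_series_plus _ _ (ex_series_scal_l c _ Hg) (ex_series_scal_l c _ Hh)).
Qed.

Lemma l2_0 : l2 (fun _ => RtoC 0).
Proof.
  apply l2_Cnorm2. eapply ex_series_ext; [|apply Series_0]. intros; rewrite Cnorm2_0; reflexivity.
Qed.

Lemma l2_le f g c : (forall k, Cnorm2 (f k) <= c * Cnorm2 (g k)) -> l2 g -> l2 f.
Proof.
  intros H Hg. apply (l2_le2 f g (fun _ => RtoC 0) c); [|exact Hg | exact l2_0].
  intros k. rewrite Cnorm2_0, Rmult_0_r, Rplus_0_r. apply H.
Qed.

Lemma l2_ext f g : (forall k, g k = f k) -> l2 f -> l2 g.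
Proof. intros H. apply (l2_le g f 1). intros k; rewrite H; lra. Qed.

Lemma l2_sub f g : l2 f -> l2 g -> l2 (seq_sub f g).
Proof. apply l2_le2 with (c := 2). intros; apply Cnorm2_sub_le. Qed.

Lemma l2_add f g : l2 f -> l2 g -> l2 (seq_add f g).
Proof. apply l2_le2 with (c := 2). intros; apply Cnorm2_add_le. Qed.

Lemma sqnorm_le2 f g h c1 c2 :
  (forall k, Cnorm2 (f k) <= c1 * Cnorm2 (g k) + c2 * Cnorm2 (h k)) -> l2 f -> l2 g -> l2 h ->
  sqnorm f <= c1 * sqnorm g + c2 * sqnorm h.
Proof.
  intros H Hf Hg Hh. apply l2_Cnorm2 in Hf, Hg, Hh.
  pose proof (ex_series_scal_l c1 _ Hg) as Hg'. pose proof (ex_series_scal_l c2 _ Hh) as Hh'.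
  rewrite !sqnorm_Cnorm2, <- !Series_scal_l, <- Series_plus by assumption.
  apply Series_le_ex; auto. apply (ex_series_plus _ _ Hg' Hh').
Qed.

Lemma sqnorm_add_le_eps x y eta : 0 < eta -> l2 x -> l2 y ->
  sqnorm (seq_add x y) <= (1 + eta) * sqnorm x + (1 + / eta) * sqnorm y.
Proof.
  intros Heta Hx Hy. apply sqnorm_le2; [intros; apply Cnorm2_add_le_eps, Heta | apply l2_add | |]; auto.
Qed.

Lemma sqnorm_le f g c : (forall k, Cnorm2 (f k) <= c * Cnorm2 (g k)) -> l2 g ->
  sqnorm f <= c * sqnorm g.
Proof.
  intros H Hg. pose proof (sqnorm_le2 f g g c 0) as Hle.
  rewrite Rmult_0_l, Rplus_0_r in Hle. apply Hle; auto; [|apply (l2_le f g c H Hg)].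
  intros k. rewrite Rmult_0_l, Rplus_0_r. apply H.
Qed.

Lemma sqnorm_sub_le (a b g : seqC) : l2 a -> l2 b -> l2 g ->
  sqnorm (seq_sub a b) <= 2 * sqnorm (seq_sub a g) + 2 * sqnorm (seq_sub b g).
Proof.
  intros Ha Hb Hg. apply sqnorm_le2; try apply l2_sub; auto.
  intros k. unfold seq_sub.
  replace (Cminus (a k) (b k)) with (Cminus (Cminus (a k) (g k)) (Cminus (b k) (g k)))
    by (apply C_ext; simpl; ring).
  apply Cnorm2_sub_le.
Qed.

Lemma sqnorm_eq_0 r : l2 r -> sqnorm r = 0 -> forall k, r k = RtoC 0.
Proof.
  intros Hr H k. rewrite sqnorm_Cnorm2 in H.
  pose proof (Series_nonneg_eq_0 _ (fun k => Cnorm2_ge_0 _) (proj1 (l2_Cnorm2 r) Hr) H k) as Hk.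
  unfold Cnorm2 in Hk. destruct (r k) as [a b]. simpl in Hk.
  apply C_ext; simpl; nra.
Qed.

Lemma l2norm_le_iff f M : l2 f -> 0 <= M -> l2norm f <= M <-> sqnorm f <= M ^ 2.
Proof.
  intros Hf HM. unfold l2norm. fold (sqnorm f). pose proof (sqnorm_ge_0 f Hf).
  rewrite <- (sqrt_pow2 M HM) at 1. split; [intros H'; apply sqrt_le_0 in H'| apply sqrt_le_1_alt];
    auto; apply pow2_ge_0.
Qed.

(** * A discrete Hardy inequality *)

Lemma Cauchy_Schwarz_weighted (a mu : nat -> R) k : (forall i, 0 < mu i) ->
  (sum_n a k) ^ 2 <= sum_n (fun i => / mu i) k * sum_n (fun i => a i ^ 2 * mu i) k.
Proof.
  intros Hmu. induction k.
  - rewrite !sum_n0. specialize (Hmu 0%nat). right; field; lra.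
  - rewrite !sum_nS. set (A := sum_n a k) in *. set (L := sum_n (fun i => / mu i) k) in *.
    set (Q := sum_n (fun i => a i ^ 2 * mu i) k) in *.
    assert (HL : 0 <= L) by (apply sum_n_nonneg; intros; left; apply Rinv_0_lt_compat; auto).
    assert (HQ : 0 <= Q) by (apply sum_n_nonneg; intros; apply Rmult_le_pos; [apply pow2_ge_0 | left; auto]).
    set (m := mu (S k)) in *. set (x := a (S k)) in *. assert (Hm : 0 < m) by apply Hmu.
    assert (Hcross : 2 * A * x <= L * (x ^ 2 * m) + / m * Q).
    { assert (Hsq : (L * (x ^ 2 * m) + / m * Q) ^ 2 =
                    (L * (x ^ 2 * m) - / m * Q) ^ 2 + 4 * (L * Q) * x ^ 2) by (field; lra).
      assert (0 <= L * (x ^ 2 * m) + / m * Q).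
      { apply Rplus_le_le_0_compat; apply Rmult_le_pos; auto; [nra | left; apply Rinv_0_lt_compat; auto]. }
      apply Rsqr_incr_0_var; [|assumption]. unfold Rsqr. pose proof (pow2_ge_0 (L * (x ^ 2 * m) - / m * Q)).
      assert (A ^ 2 * x ^ 2 <= L * Q * x ^ 2) by (apply Rmult_le_compat_r; [apply pow2_ge_0 | auto]).
      nra. }
    assert (L * (x ^ 2 * m) + / m * Q + / m * (x ^ 2 * m) = L * (x ^ 2 * m) + / m * Q + x ^ 2)
      by (field; lra).
    nra.
Qed.

Lemma Cauchy_Schwarz_count (a : nat -> R) n :
  (sum_n a n) ^ 2 <= INR (S n) * sum_n (fun i => a i ^ 2) n.
Proof.
  eapply Rle_trans; [apply (Cauchy_Schwarz_weighted a (fun _ => 1)); intros; lra|].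
  rewrite (sum_n_ext _ (fun _ => 1)) by (intros; apply Rinv_1). rewrite sum_n_const, Rmult_1_r.
  right; f_equal. apply sum_n_ext; intros; apply Rmult_1_r.
Qed.

Definition sqrtS (k : nat) : R := sqrt (INR (S k)).

Lemma sqrtS_gt_0 k : 0 < sqrtS k.
Proof. apply sqrt_lt_R0, lt_0_INR; lia. Qed.

Lemma sqrtS_sqr k : sqrtS k * sqrtS k = INR (S k).
Proof. apply sqrt_sqrt, pos_INR. Qed.

Lemma sqrtS_le_S k : sqrtS k <= sqrtS (S k).
Proof. apply sqrt_le_1_alt, le_INR; lia. Qed.

Lemma sum_n_inv_sqrtS_le k : sum_n (fun i => / sqrtS i) k <= 2 * sqrtS k.
Proof.
  induction k.
  - rewrite sum_n0. unfold sqrtS; simpl. rewrite sqrt_1. lra.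
  - rewrite sum_nS. pose proof (sqrtS_sqr k) as Hk; pose proof (sqrtS_sqr (S k)) as HSk.
    pose proof (sqrtS_gt_0 k); pose proof (sqrtS_gt_0 (S k)).
    rewrite S_INR in HSk. set (x := sqrtS k) in *; set (y := sqrtS (S k)) in *.
    assert (/ y <= 2 * y - 2 * x).
    { apply Rmult_le_reg_r with y; auto. rewrite Rinv_l by lra.
      pose proof (pow2_ge_0 (x - y)). nra. }
    lra.
Qed.

Lemma sum_n_extend (c : nat -> R) k K : (k <= K)%nat ->
  @eq R (sum_n c k) (sum_n (fun i => if (i <=? k)%nat then c i else 0) K).
Proof.
  intros H. induction H.
  - apply sum_n_ext_loc. intros i Hi. destruct (Nat.leb_spec i k); [reflexivity | lia].
  - rewrite sum_nS, <- IHle. destruct (Nat.leb_spec (S m) k); [lia|]. symmetry; apply Rplus_0_r.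
Qed.

Section Hardy.

Variable w : nat -> R.
Hypothesis w_ge_0 : forall k, 0 <= w k.
Hypothesis w_ex : ex_series w.

Definition wtail (m : nat) : R := Series (fun k => w (m + k)%nat).

Lemma wtail_ge_0 m : 0 <= wtail m.
Proof. apply Series_ge_0; auto. apply (ex_series_incr_n w m), w_ex. Qed.

Lemma wtail_S m : wtail m = w m + wtail (S m).
Proof.
  unfold wtail. rewrite Series_incr_1 by apply (ex_series_incr_n w m), w_ex.
  rewrite Nat.add_0_r. f_equal. apply Series_ext; intros; f_equal; lia.
Qed.

Variable B : R.
Hypothesis wtail_le : forall m, INR (S m) * wtail m <= B.

Lemma Hardy_const_ge_0 : 0 <= B.
Proof. specialize (wtail_le 0). pose proof (wtail_ge_0 0). simpl in wtail_le. lra. Qed.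

Lemma wtail_le_div m : wtail m <= B / (sqrtS m * sqrtS m).
Proof.
  rewrite sqrtS_sqr. pose proof (wtail_le m). assert (0 < INR (S m)) by (apply lt_0_INR; lia).
  apply Rmult_le_reg_l with (INR (S m)); auto. field_simplify; lra.
Qed.

Definition weighted_tail_sum (i K : nat) : R :=
  sum_n (fun k => if (i <=? k)%nat then w k * sqrtS k else 0) K.

Lemma weighted_tail_sum_lt i K : (K < i)%nat -> weighted_tail_sum i K = 0.
Proof. intros H. apply sum_n_zero. intros k Hk. destruct (Nat.leb_spec i k); [lia | reflexivity]. Qed.

Lemma weighted_tail_sum_S i K : weighted_tail_sum i (S K) =
  weighted_tail_sum i K + (if (i <=? S K)%nat then w (S K) * sqrtS (S K) else 0).
Proof. apply sum_nS. Qed.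

(* Summation by parts, with [w k = wtail k - wtail (S k)] and [wtail k <= B / (k + 1)]. *)
Lemma weighted_tail_sum_telescope i d :
  weighted_tail_sum i (i + d) + wtail (S (i + d)) * sqrtS (i + d)
  <= wtail i * sqrtS i + B * (/ sqrtS i - / sqrtS (i + d)).
Proof.
  induction d.
  - rewrite Nat.add_0_r, (wtail_S i), Rminus_diag, Rmult_0_r.
    destruct i; [unfold weighted_tail_sum; rewrite sum_n0; simpl; lra|].
    rewrite weighted_tail_sum_S, weighted_tail_sum_lt, Nat.leb_refl by lia. lra.
  - rewrite Nat.add_succ_r, weighted_tail_sum_S.
    replace ((i <=? S (i + d))%nat) with true by (symmetry; apply Nat.leb_le; lia).
    set (K := (i + d)%nat) in *.
    pose proof (wtail_S (S K)) as HW.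
    pose proof (sqrtS_gt_0 K); pose proof (sqrtS_gt_0 (S K)); pose proof (sqrtS_le_S K).
    pose proof (wtail_le_div (S K)). pose proof Hardy_const_ge_0.
    assert (wtail (S K) * (sqrtS (S K) - sqrtS K) <= B * (/ sqrtS K - / sqrtS (S K))).
    { replace (/ sqrtS K - / sqrtS (S K))
        with ((sqrtS (S K) - sqrtS K) * / (sqrtS K * sqrtS (S K))) by (field; lra).
      apply Rle_trans with (B / (sqrtS (S K) * sqrtS (S K)) * (sqrtS (S K) - sqrtS K)).
      - apply Rmult_le_compat_r; lra.
      - unfold Rdiv. rewrite (Rmult_comm (sqrtS (S K) - sqrtS K)), <- Rmult_assoc.
        apply Rmult_le_compat_r; [lra|]. apply Rmult_le_compat_l; auto.
        apply Rinv_le_contravar; [nra|]. apply Rmult_le_compat_r; lra. }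
    assert (weighted_tail_sum i K + w (S K) * sqrtS (S K) + wtail (S (S K)) * sqrtS (S K) =
            weighted_tail_sum i K + wtail (S K) * sqrtS K + wtail (S K) * (sqrtS (S K) - sqrtS K))
      by (rewrite HW; ring).
    lra.
Qed.

Lemma weighted_tail_sum_le i K : weighted_tail_sum i K <= 2 * B / sqrtS i.
Proof.
  pose proof Hardy_const_ge_0; pose proof (sqrtS_gt_0 i).
  destruct (Nat.lt_ge_cases K i).
  - rewrite weighted_tail_sum_lt by auto. apply Rdiv_le_0_compat; lra.
  - replace K with (i + (K - i))%nat by lia. pose proof (weighted_tail_sum_telescope i (K - i)).
    pose proof (wtail_ge_0 (S (i + (K - i)))). pose proof (sqrtS_gt_0 (i + (K - i))).
    assert (wtail i * sqrtS i <= B / sqrtS i).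
    { apply Rle_trans with (B / (sqrtS i * sqrtS i) * sqrtS i).
      - apply Rmult_le_compat_r; [lra | apply wtail_le_div].
      - right; field; lra. }
    assert (0 < / sqrtS (i + (K - i))) by (apply Rinv_0_lt_compat; auto).
    assert (0 <= wtail (S (i + (K - i))) * sqrtS (i + (K - i))) by (apply Rmult_le_pos; lra).
    unfold Rdiv in *. nra.
Qed.

(* Cauchy-Schwarz with weights [sqrt (i + 1)], then exchange of the order of summation. *)
Lemma discrete_Hardy (a : nat -> R) K : (forall k, 0 <= a k) ->
  sum_n (fun k => w k * (sum_n a k) ^ 2) K <= 4 * B * sum_n (fun i => a i ^ 2) K.
Proof.
  intros Ha.
  apply Rle_trans with
    (sum_n (fun k => w k * (2 * sqrtS k * sum_n (fun i => a i ^ 2 * sqrtS i) k)) K).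
  { apply sum_n_le. intros k _. apply Rmult_le_compat_l; auto.
    eapply Rle_trans; [apply (Cauchy_Schwarz_weighted a sqrtS k), sqrtS_gt_0|].
    apply Rmult_le_compat_r; [|apply sum_n_inv_sqrtS_le].
    apply sum_n_nonneg; intros; apply Rmult_le_pos; [apply pow2_ge_0 | left; apply sqrtS_gt_0]. }
  apply Rle_trans with (sum_n (fun i => 2 * (a i ^ 2 * sqrtS i) * weighted_tail_sum i K) K).
  { right. rewrite (sum_n_ext_loc _ (fun k => sum_n (fun i =>
        (if (i <=? k)%nat then w k * sqrtS k else 0) * (2 * (a i ^ 2 * sqrtS i))) K)).
    - rewrite sum_n_switch. apply sum_n_extR. intros i _. unfold weighted_tail_sum.
      rewrite <- sum_n_scalR. apply sum_n_extR; intros j _; destruct (i <=? j)%nat; ring.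
    - intros k Hk. rewrite (sum_n_extend _ k K Hk), <- !sum_n_scalR.
      apply sum_n_extR. intros i _. destruct (Nat.leb_spec i k); ring. }
  rewrite <- (sum_n_scalR (4 * B)). apply sum_n_le. intros i _.
  pose proof (weighted_tail_sum_le i K). pose proof (sqrtS_gt_0 i).
  assert (0 <= 2 * (a i ^ 2 * sqrtS i)) by (pose proof (pow2_ge_0 (a i)); nra).
  apply Rle_trans with (2 * (a i ^ 2 * sqrtS i) * (2 * B / sqrtS i)).
  - apply Rmult_le_compat_l; auto.
  - right; field; lra.
Qed.

End Hardy.

Lemma Rbar_glb_correct (E : Rbar -> Prop) : Rbar_is_glb E (Rbar_glb E).
Proof. unfold Rbar_glb. destruct (Rbar_ex_glb E) as [g Hg]. exact Hg. Qed.

Lemma Rbar_mult_p_infty_pos (c : R) : 0 < c -> Rbar_mult (Finite c) p_infty = p_infty.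
Proof.
  intros Hc. simpl. destruct (Rle_dec 0 c) as [H|]; [|lra].
  destruct (Rle_lt_or_eq_dec 0 c H); [reflexivity | lra].
Qed.

Lemma Rbar_mult_le_compat_scal (a b : R) (x : Rbar) :
  0 < a <= b -> Rbar_le (Finite 0) x -> Rbar_le (Rbar_mult a x) (Rbar_mult b x).
Proof.
  intros Hab Hx. destruct x as [x| |]; [simpl in Hx |- *; nra| |contradiction].
  rewrite !Rbar_mult_p_infty_pos by lra. exact I.
Qed.

Lemma op_bounded_by_sqnorm T M : 0 <= M ->
  (forall f, l2 f -> l2 (T f) /\ sqnorm (T f) <= M ^ 2 * sqnorm f) -> op_bounded_by T M.
Proof.
  intros HM H f Hf. destruct (H f Hf) as [HTf Hle]. split; [exact HTf|].
  unfold l2norm. fold (sqnorm (T f)) (sqnorm f).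
  rewrite <- (sqrt_pow2 M HM), <- sqrt_mult; [apply sqrt_le_1_alt, Hle | apply pow2_ge_0 |].
  apply sqnorm_ge_0, Hf.
Qed.

Lemma sqnorm_le_of_op_bounded T M f : op_bounded_by T M -> 0 <= M -> l2 f ->
  l2 (T f) /\ sqnorm (T f) <= M ^ 2 * sqnorm f.
Proof.
  intros HT HM Hf. destruct (HT f Hf) as [HTf Hle]. split; [exact HTf|].
  pose proof (sqnorm_ge_0 _ Hf).
  apply l2norm_le_iff in Hle; [|exact HTf | apply Rmult_le_pos; [exact HM | apply sqrt_pos]].
  unfold l2norm in Hle. rewrite Rpow_mult_distr, pow2_sqrt in Hle; auto.
Qed.

Lemma sqnorm_le_of_approx T Q M h eta : 0 < eta -> 0 <= M -> op_bounded_by (op_sub T Q) M ->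
  (forall f, l2 f -> l2 (Q f)) -> l2 h ->
  sqnorm (T h) <= (1 + eta) * (M ^ 2 * sqnorm h) + (1 + / eta) * sqnorm (Q h).
Proof.
  intros Heta HM HTQ HQ Hh. destruct (sqnorm_le_of_op_bounded _ _ h HTQ HM Hh) as [HTQl HTQb].
  rewrite (sqnorm_ext _ (seq_add (op_sub T Q h) (Q h))) by (intros k; apply C_ext; simpl; ring).
  eapply Rle_trans; [apply (sqnorm_add_le_eps _ _ eta Heta HTQl (HQ h Hh))|].
  apply Rplus_le_compat_r, Rmult_le_compat_l; [lra | exact HTQb].
Qed.

Definition unit0 : seqC := fun k => if (k =? 0)%nat then RtoC 1 else RtoC 0.

Lemma unit0_l2 : l2 unit0 /\ sqnorm unit0 <= 1.
Proof.
  apply l2_of_bounded_sum_n. intros K.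
  rewrite (sum_n_single _ K 0); [unfold unit0, Cnorm2; simpl; lra | lia |].
  intros i _ Hi. unfold unit0. destruct (Nat.eqb_spec i 0); [lia | apply Cnorm2_0].
Qed.

Lemma op_bounded_by_ge_0 T M : op_bounded_by T M -> 0 <= M.
Proof.
  intros H. destruct unit0_l2 as [Hl _]. destruct (H _ Hl) as [_ HT].
  assert (Hpos : 0 < l2norm unit0).
  { apply sqrt_lt_R0. eapply Rlt_le_trans; [|apply (Cnorm2_le_sqnorm _ 0 Hl)].
    unfold unit0, Cnorm2; simpl; lra. }
  assert (0 <= l2norm (T unit0)) by apply sqrt_pos.
  destruct (Rle_dec 0 M); [assumption | nra].
Qed.

Lemma opnorm_le T M : op_bounded_by T M -> Rbar_le (opnorm T) (Finite M).
Proof. intros H. apply (Glb_Rbar_correct (fun M => op_bounded_by T M)), H. Qed.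

Lemma ess_norm_le_opnorm T P : finite_rank P -> Rbar_le (ess_norm T) (opnorm (op_sub T P)).
Proof. intros H. apply Rbar_glb_correct. exists P; auto. Qed.

Lemma ess_norm_glb T (x : Rbar) :
  (forall P M, finite_rank P -> op_bounded_by (op_sub T P) M -> Rbar_le x (Finite M)) ->
  Rbar_le x (ess_norm T).
Proof.
  intros H. apply Rbar_glb_correct. intros y [P [HP ->]].
  apply (Glb_Rbar_correct (fun M => op_bounded_by (op_sub T P) M)).
  intros M HM. exact (H P M HP HM).
Qed.


(** * The Rhaly operator and the quantities J_n *)

Section Rhaly.

Variable alpha : seqC.
Hypothesis alpha_l2 : l2 alpha.

Lemma tail2_Cnorm2 m : tail2 alpha m = Series (fun k => Cnorm2 (alpha (m + k)%nat)).
Proof. apply Series_ext. intros; apply Cmod_pow2. Qed.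

Lemma tail2_ex m : ex_series (fun k => Cnorm2 (alpha (m + k)%nat)).
Proof. apply (ex_series_incr_n (fun k => Cnorm2 (alpha k)) m), l2_Cnorm2, alpha_l2. Qed.

Lemma tail2_ge_0 m : 0 <= tail2 alpha m.
Proof. rewrite tail2_Cnorm2. apply Series_ge_0; [intros; apply Cnorm2_ge_0 | apply tail2_ex]. Qed.

Lemma tail2_small eps : 0 < eps -> exists N, forall N', (N <= N')%nat -> tail2 alpha N' <= eps.
Proof.
  intros He. pose proof alpha_l2 as H. apply l2_Cnorm2 in H.
  assert (Hl : is_lim_seq (sum_n (fun k => Cnorm2 (alpha k))) (Series (fun k => Cnorm2 (alpha k))))
    by exact (Series_correct _ H).
  apply is_lim_seq_spec in Hl.
  destruct (Hl (mkposreal eps He)) as [N HN].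
  exists (S N). intros N' HN'. destruct N' as [|N']; [lia|].
  rewrite tail2_Cnorm2. specialize (HN N' ltac:(lia)). simpl in HN.
  rewrite (Series_split _ N' H) in HN. apply Rabs_lt_between in HN. lra.
Qed.

Lemma J_ge_term n m : (n <= m)%nat ->
  Rbar_le (Finite (sqrt (INR (m + 1 - n)) * sqrt (tail2 alpha m))) (J alpha n).
Proof. intros H. apply Lub_Rbar_correct. exists m; auto. Qed.

Lemma J_le n (x : R) :
  (forall m, (n <= m)%nat -> sqrt (INR (m + 1 - n)) * sqrt (tail2 alpha m) <= x) ->
  Rbar_le (J alpha n) (Finite x).
Proof. intros H. apply Lub_Rbar_correct. intros y [m [Hm ->]]. apply H, Hm. Qed.

Lemma J_ge_0 n : Rbar_le (Finite 0) (J alpha n).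
Proof.
  eapply Rbar_le_trans; [|apply (J_ge_term n n); auto]. apply Rmult_le_pos; apply sqrt_pos.
Qed.

Lemma J_finite_bound n x : J alpha n = Finite x ->
  forall m, (n <= m)%nat -> INR (m + 1 - n) * tail2 alpha m <= x ^ 2.
Proof.
  intros H m Hm. pose proof (J_ge_term n m Hm) as Hle. rewrite H in Hle. simpl in Hle.
  pose proof (pos_INR (m + 1 - n)); pose proof (tail2_ge_0 m).
  rewrite <- (sqrt_sqrt (INR (m + 1 - n))), <- (sqrt_sqrt (tail2 alpha m)) by assumption.
  assert (0 <= sqrt (INR (m + 1 - n)) * sqrt (tail2 alpha m)) by (apply Rmult_le_pos; apply sqrt_pos).
  simpl. nra.
Qed.

Lemma Jlim_Inf_seq : Jlim alpha = Inf_seq (J alpha).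
Proof. symmetry; apply Inf_eq_glb. Qed.

Lemma Jlim_le_J n : Rbar_le (Jlim alpha) (J alpha n).
Proof. apply Rbar_glb_correct. exists n; reflexivity. Qed.

Lemma Jlim_glb (x : Rbar) : (forall n, Rbar_le x (J alpha n)) -> Rbar_le x (Jlim alpha).
Proof. intros H. apply Rbar_glb_correct. intros y [n ->]. apply H. Qed.

Lemma Jlim_ge_0 : Rbar_le (Finite 0) (Jlim alpha).
Proof. apply Jlim_glb, J_ge_0. Qed.

(* [R_alpha] splits as [rhaly_head n + rhaly_tail n]: the head only sees [f 0, ..., f (n-1)],
   so it has rank at most [n + 1], and the tail only sees [f n, f (n+1), ...]. *)

Definition trunc (n : nat) (f : seqC) : seqC := fun j => if (j <? n)%nat then f j else RtoC 0.

Definition rhaly_head (n : nat) : op := fun f => rhaly alpha (trunc n f).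

Definition rhaly_tail (n : nat) : op := op_sub (rhaly alpha) (rhaly_head n).

Lemma rhaly_split n f k : rhaly alpha f k = Cplus (rhaly_tail n f k) (rhaly_head n f k).
Proof. apply C_ext; simpl; ring. Qed.

Lemma rhaly_sub f g : rhaly alpha (seq_sub f g) = seq_sub (rhaly alpha f) (rhaly alpha g).
Proof.
  apply functional_extensionality; intros k. unfold rhaly, seq_sub.
  rewrite sum_n_Cminus. apply C_ext; simpl; ring.
Qed.

Lemma rhaly_tail_eq n f k : rhaly_tail n f k =
  Cmult (alpha k) (sum_n (fun j => if (j <? n)%nat then RtoC 0 else f j) k).
Proof.
  unfold rhaly_tail, op_sub, seq_sub, rhaly_head, rhaly.
  replace (sum_n (fun j => if (j <? n)%nat then RtoC 0 else f j) k)
    with (sum_n (fun j => Cminus (f j) (trunc n f j)) k).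
  - rewrite sum_n_Cminus. apply C_ext; simpl; ring.
  - apply sum_n_ext. intros j. unfold trunc. destruct (j <? n)%nat; apply C_ext; simpl; ring.
Qed.

Lemma rhaly_tail_lt n f k : (k < n)%nat -> rhaly_tail n f k = RtoC 0.
Proof.
  intros H. rewrite rhaly_tail_eq, sumC_zero; [apply C_ext; simpl; ring|].
  intros j Hj. destruct (Nat.ltb_spec j n); [reflexivity | lia].
Qed.

Lemma rhaly_tail_add n f i :
  rhaly_tail n f (n + i)%nat = Cmult (alpha (n + i)%nat) (sum_n (fun i' => f (n + i')%nat) i).
Proof.
  rewrite rhaly_tail_eq, sumC_shift.
  - f_equal. apply sum_n_ext. intros j. destruct (Nat.ltb_spec (n + j) n); [lia | reflexivity].
  - intros j Hj. destruct (Nat.ltb_spec j n); [reflexivity | lia].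
Qed.

(* The discrete Hardy inequality applied to the weights [|alpha (n + i)|^2]. *)
Lemma rhaly_tail_bound n Bv :
  (forall m, (n <= m)%nat -> INR (m + 1 - n) * tail2 alpha m <= Bv) ->
  forall f, l2 f -> l2 (rhaly_tail n f) /\ sqnorm (rhaly_tail n f) <= 4 * Bv * sqnorm f.
Proof.
  intros HB f Hf. set (w := fun i => Cnorm2 (alpha (n + i)%nat)).
  assert (Hw : forall k, 0 <= w k) by (intros; apply Cnorm2_ge_0).
  assert (Hwtail : forall m, INR (S m) * wtail w m <= Bv).
  { intros m. specialize (HB (n + m)%nat ltac:(lia)).
    replace (n + m + 1 - n)%nat with (S m) in HB by lia. rewrite tail2_Cnorm2 in HB.
    unfold wtail, w. erewrite Series_ext; [exact HB|]. intros k. rewrite Nat.add_assoc. reflexivity. }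
  pose proof (Hardy_const_ge_0 w Hw (tail2_ex n) Bv Hwtail) as HBv.
  apply l2_of_bounded_sum_n. intros K.
  apply Rle_trans with (sum_n (fun k => Cnorm2 (rhaly_tail n f k)) (n + K)).
  { apply sum_n_le_widen; [intros; apply Cnorm2_ge_0 | lia]. }
  rewrite sum_n_shift by (intros j Hj; rewrite rhaly_tail_lt by exact Hj; apply Cnorm2_0).
  apply Rle_trans with (sum_n (fun k => w k * (sum_n (fun i => Cmod (f (n + i)%nat)) k) ^ 2) K).
  { apply sum_n_le. intros i _. rewrite rhaly_tail_add, Cnorm2_mult.
    apply Rmult_le_compat_l; [apply Cnorm2_ge_0 | apply Cnorm2_sum_n_le]. }
  eapply Rle_trans; [apply (discrete_Hardy w Hw (tail2_ex n) Bv Hwtail); intros; apply Cmod_ge_0|].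
  apply Rmult_le_compat_l; [lra|].
  eapply Rle_trans; [|apply (sum_n_le_sqnorm f (n + K) Hf)].
  eapply Rle_trans; [|apply (sum_n_shift_le (fun j => Cnorm2 (f j))); intros; apply Cnorm2_ge_0].
  right; apply sum_n_extR; intros; apply Cmod_pow2.
Qed.

Lemma rhaly_tail_bound_J n x : J alpha n = Finite x ->
  forall f, l2 f -> l2 (rhaly_tail n f) /\ sqnorm (rhaly_tail n f) <= 4 * x ^ 2 * sqnorm f.
Proof. intros HJ. apply rhaly_tail_bound, J_finite_bound, HJ. Qed.

Lemma sum_n_Cmod_trunc_le n f k :
  sum_n (fun j => Cmod (trunc n f j)) k <= sum_n (fun j => Cmod (f j)) n.
Proof.
  assert (Hf : forall j, 0 <= Cmod (f j)) by (intros; apply Cmod_ge_0).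
  induction k.
  - rewrite sum_n0. unfold trunc. destruct (Nat.ltb_spec 0 n).
    + eapply Rle_trans; [|apply (sum_n_le_widen _ 0); auto; lia]. rewrite sum_n0; lra.
    + rewrite Cmod_0. apply sum_n_nonneg; auto.
  - rewrite sum_nS. unfold trunc at 2. destruct (Nat.ltb_spec (S k) n).
    + apply Rle_trans with (sum_n (fun j => Cmod (f j)) (S k)); [|apply sum_n_le_widen; auto; lia].
      rewrite sum_nS. apply Rplus_le_compat_r, sum_n_le. intros j _. unfold trunc.
      destruct (j <? n)%nat; [lra | rewrite Cmod_0; auto].
    + rewrite Cmod_0. lra.
Qed.

Lemma rhaly_head_bound n f : l2 (rhaly_head n f) /\
  sqnorm (rhaly_head n f) <= sqnorm alpha * (INR (S n) * sum_n (fun j => Cnorm2 (f j)) n).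
Proof.
  set (c := INR (S n) * sum_n (fun j => Cnorm2 (f j)) n).
  assert (H : forall k, Cnorm2 (rhaly_head n f k) <= c * Cnorm2 (alpha k)).
  { intros k. unfold rhaly_head, rhaly. rewrite Cnorm2_mult, (Rmult_comm c).
    apply Rmult_le_compat_l; [apply Cnorm2_ge_0|].
    eapply Rle_trans; [apply Cnorm2_sum_n_le|]. eapply Rle_trans.
    { apply pow_incr. split; [apply sum_n_nonneg; intros; apply Cmod_ge_0 | apply sum_n_Cmod_trunc_le]. }
    eapply Rle_trans; [apply Cauchy_Schwarz_count|].
    right. unfold c. f_equal. apply sum_n_extR; intros; apply Cmod_pow2. }
  split; [apply (l2_le _ alpha c H alpha_l2)|].
  rewrite Rmult_comm. apply sqnorm_le; auto.
Qed.

Lemma rhaly_sqnorm_le n x h : J alpha n = Finite x -> l2 h ->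
  l2 (rhaly alpha h) /\ sqnorm (rhaly alpha h) <=
    8 * x ^ 2 * sqnorm h + 2 * sqnorm alpha * (INR (S n) * sum_n (fun j => Cnorm2 (h j)) n).
Proof.
  intros HJ Hh.
  destruct (rhaly_tail_bound_J n x HJ h Hh) as [HDl HDb].
  destruct (rhaly_head_bound n h) as [HPl HPb].
  assert (Hsplit : forall k, Cnorm2 (rhaly alpha h k) <=
      2 * Cnorm2 (rhaly_tail n h k) + 2 * Cnorm2 (rhaly_head n h k)).
  { intros k. rewrite rhaly_split with (n := n). apply Cnorm2_add_le. }
  assert (HRl : l2 (rhaly alpha h)) by exact (l2_le2 _ _ _ 2 Hsplit HDl HPl).
  split; [exact HRl|].
  eapply Rle_trans; [apply (sqnorm_le2 _ _ _ 2 2 Hsplit HRl HDl HPl)|]. lra.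
Qed.

Lemma rhaly_head_linear n : op_linear (rhaly_head n).
Proof.
  intros a f g _ _. apply functional_extensionality. intros k. unfold rhaly_head, rhaly, seq_add, seq_scal.
  rewrite (sum_n_ext (trunc n (fun j => Cplus (Cmult a (f j)) (g j)))
                     (fun j => Cplus (Cmult a (trunc n f j)) (trunc n g j))).
  - rewrite sum_n_Cplus_scal. apply C_ext; simpl; ring.
  - intros j. unfold trunc. destruct (j <? n)%nat; [reflexivity | apply C_ext; simpl; ring].
Qed.

Lemma rhaly_head_bounded n : op_bounded_by (rhaly_head n) (sqrt (sqnorm alpha * INR (S n))).
Proof.
  pose proof (sqnorm_ge_0 _ alpha_l2) as Ha. pose proof (pos_INR (S n)).
  apply op_bounded_by_sqnorm; [apply sqrt_pos|]. intros f Hf.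
  destruct (rhaly_head_bound n f) as [H1 H2]. split; [exact H1|].
  rewrite pow2_sqrt by (apply Rmult_le_pos; auto). eapply Rle_trans; [exact H2|].
  rewrite Rmult_assoc. apply Rmult_le_compat_l, Rmult_le_compat_l, sum_n_le_sqnorm; auto.
Qed.

Lemma sum_n_trunc_ge n f k : (n <= k)%nat -> sum_n (trunc n f) k = sum_n (trunc n f) n.
Proof.
  intros H. induction H; [reflexivity|]. rewrite sum_Sn, IHle. unfold trunc at 2.
  destruct (Nat.ltb_spec (S m) n); [lia | apply C_ext; simpl; ring].
Qed.

(* The range of [rhaly_head n] is spanned by [alpha_i e_i] (i < n) and [alpha 1_{[n, oo)}]. *)
Lemma rhaly_head_finite_rank n : finite_rank (rhaly_head n).
Proof.
  split; [apply rhaly_head_linear | split; [eexists; apply rhaly_head_bounded|]].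
  exists n, (fun i k => if (i <? n)%nat then (if (k =? i)%nat then alpha k else RtoC 0)
                   else (if (k <? n)%nat then RtoC 0 else alpha k)).
  split.
  - intros i. apply (l2_le _ alpha 1); auto. intros k. pose proof (Cnorm2_ge_0 (alpha k)).
    destruct (i <? n)%nat; [destruct (k =? i)%nat | destruct (k <? n)%nat]; rewrite ?Cnorm2_0; lra.
  - intros f Hf. exists (fun i => sum_n (trunc n f) i). apply functional_extensionality. intros k.
    unfold rhaly_head, rhaly. destruct (Nat.lt_ge_cases k n).
    + rewrite (sumC_single _ n k); [|lia|].
      * rewrite Nat.eqb_refl. destruct (Nat.ltb_spec k n); [apply C_ext; simpl; ring | lia].
      * intros i Hi Hik. destruct (Nat.ltb_spec i n).
        -- destruct (Nat.eqb_spec k i); [lia | apply C_ext; simpl; ring].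
        -- destruct (Nat.ltb_spec k n); [apply C_ext; simpl; ring | lia].
    + rewrite (sumC_single _ n n); [|lia|].
      * rewrite Nat.ltb_irrefl. destruct (Nat.ltb_spec k n); [lia|].
        rewrite sum_n_trunc_ge by assumption. apply C_ext; simpl; ring.
      * intros i Hi Hik. destruct (Nat.ltb_spec i n); [|lia].
        destruct (Nat.eqb_spec k i); [lia | apply C_ext; simpl; ring].
Qed.

Lemma ess_norm_rhaly_le_J n : Rbar_le (ess_norm (rhaly alpha)) (Rbar_mult 2 (J alpha n)).
Proof.
  pose proof (J_ge_0 n) as HJ0.
  destruct (J alpha n) as [x| |] eqn:HJ; [simpl in HJ0 | |contradiction].
  2: rewrite Rbar_mult_p_infty_pos by lra; destruct (ess_norm (rhaly alpha)); exact I.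
  eapply Rbar_le_trans; [apply (ess_norm_le_opnorm _ (rhaly_head n)), rhaly_head_finite_rank|].
  apply opnorm_le, op_bounded_by_sqnorm; [lra|]. intros f Hf.
  destruct (rhaly_tail_bound_J n x HJ f Hf) as [H1 H2]. split; [exact H1|].
  replace ((2 * x) ^ 2) with (4 * x ^ 2) by ring. exact H2.
Qed.

Lemma ess_norm_rhaly_le_Jlim : Rbar_le (ess_norm (rhaly alpha)) (Rbar_mult 2 (Jlim alpha)).
Proof.
  rewrite Jlim_Inf_seq, <- Inf_seq_scal_l, Inf_eq_glb by lra.
  apply Rbar_glb_correct. intros y [n ->]. apply ess_norm_rhaly_le_J.
Qed.

End Rhaly.

(** * Normalised blocks and the lower bound *)

Definition in_block (n m j : nat) : bool := (n <=? j)%nat && (j <=? m)%nat.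

(* [block_count n m K] is the number of [j <= K] in the block [n, m]. *)
Definition block_count (n m K : nat) : nat := (S (Nat.min K m) - n)%nat.

Definition block_height (n m : nat) : R := / sqrt (INR (S m - n)).

Definition block (n m : nat) : seqC :=
  fun j => if in_block n m j then RtoC (block_height n m) else RtoC 0.

Lemma sum_n_block_indicator n m (x : R) K :
  @eq R (sum_n (fun j => if in_block n m j then x else 0) K) (INR (block_count n m K) * x).
Proof.
  unfold in_block, block_count. induction K.
  - rewrite sum_n0. destruct n; simpl; ring.
  - rewrite sum_nS, IHK.
    destruct (Nat.leb_spec n (S K)), (Nat.leb_spec (S K) m); cbn [andb];
      [ replace (S (Nat.min (S K) m) - n)%nat with (S (S (Nat.min K m) - n)) by lia;
        rewrite S_INR; ring
      | replace (S (Nat.min (S K) m) - n)%nat with (S (Nat.min K m) - n)%nat by lia; ring ..].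
Qed.

Lemma block_height_sqr n m : (n <= m)%nat -> block_height n m ^ 2 = / INR (S m - n).
Proof.
  intros H. unfold block_height. assert (0 < INR (S m - n)) by (apply lt_0_INR; lia).
  rewrite pow_inv, pow2_sqrt by lra. reflexivity.
Qed.

Lemma sum_n_block n m k : sum_n (block n m) k = RtoC (INR (block_count n m k) * block_height n m).
Proof.
  apply C_ext.
  - rewrite fst_sum_n, <- sum_n_block_indicator. apply sum_n_extR.
    intros; unfold block; destruct (in_block n m k0); reflexivity.
  - rewrite snd_sum_n. apply sum_n_zero. intros; unfold block; destruct (in_block n m k0); reflexivity.
Qed.

Lemma block_l2 n m : (n <= m)%nat -> l2 (block n m) /\ sqnorm (block n m) <= 1.
Proof.
  intros H. apply l2_of_bounded_sum_n. intros K.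
  rewrite (sum_n_extR _ (fun j => if in_block n m j then block_height n m ^ 2 else 0))
    by (intros j _; unfold block; destruct (in_block n m j); unfold Cnorm2; simpl; ring).
  rewrite sum_n_block_indicator, block_height_sqr by exact H.
  assert (0 < INR (S m - n)) by (apply lt_0_INR; lia).
  assert (INR (block_count n m K) <= INR (S m - n)) by (apply le_INR; unfold block_count; lia).
  apply Rmult_le_reg_r with (INR (S m - n)); [lra|]. field_simplify; lra.
Qed.

Lemma block_pair_l2 n m n' m' : (n <= m)%nat -> (m < n')%nat -> (n' <= m')%nat ->
  l2 (seq_sub (block n m) (block n' m')) /\ sqnorm (seq_sub (block n m) (block n' m')) <= 2.
Proof.
  intros H1 H2 H3. destruct (block_l2 n m H1) as [Hl Hb]; destruct (block_l2 n' m' H3) as [Hl' Hb'].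
  assert (Hdisj : forall k, Cnorm2 (seq_sub (block n m) (block n' m') k) <=
                            1 * Cnorm2 (block n m k) + 1 * Cnorm2 (block n' m' k)).
  { intros k. unfold seq_sub, block, in_block.
    destruct (Nat.leb_spec n k), (Nat.leb_spec k m), (Nat.leb_spec n' k), (Nat.leb_spec k m');
      cbn [andb]; try lia; unfold Cnorm2; simpl; lra. }
  pose proof (l2_sub _ _ Hl Hl') as Hsub. split; [exact Hsub|].
  pose proof (sqnorm_le2 _ _ _ 1 1 Hdisj Hsub Hl Hl'). lra.
Qed.

Section Blocks.

Variable alpha : seqC.
Hypothesis alpha_l2 : l2 alpha.

Lemma rhaly_block_Cnorm2 n m k :
  Cnorm2 (rhaly alpha (block n m) k) = Cnorm2 (alpha k) * (INR (block_count n m k) * block_height n m) ^ 2.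
Proof. unfold rhaly. rewrite sum_n_block, Cnorm2_mult. f_equal. unfold Cnorm2; simpl; ring. Qed.

Lemma rhaly_block_lt n m k : (k < n)%nat -> rhaly alpha (block n m) k = RtoC 0.
Proof.
  intros H. unfold rhaly. rewrite sum_n_block. unfold block_count.
  replace (S (Nat.min k m) - n)%nat with 0%nat by lia. apply C_ext; simpl; ring.
Qed.

Lemma rhaly_block_Cnorm2_le n m k : (n <= m)%nat ->
  Cnorm2 (rhaly alpha (block n m) k) <= INR (S m - n) * Cnorm2 (alpha k).
Proof.
  intros H. rewrite rhaly_block_Cnorm2, Rmult_comm. apply Rmult_le_compat_r; [apply Cnorm2_ge_0|].
  rewrite Rpow_mult_distr, block_height_sqr by exact H.
  assert (0 < INR (S m - n)) by (apply lt_0_INR; lia).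
  assert (INR (block_count n m k) <= INR (S m - n)) by (apply le_INR; unfold block_count; lia).
  pose proof (pos_INR (block_count n m k)).
  apply Rmult_le_reg_r with (INR (S m - n)); [lra|]. field_simplify; [|lra]. nra.
Qed.

Lemma rhaly_block_Cnorm2_ge n m k : (n <= m)%nat -> (m <= k)%nat ->
  Cnorm2 (rhaly alpha (block n m) k) = INR (S m - n) * Cnorm2 (alpha k).
Proof.
  intros H H'. rewrite rhaly_block_Cnorm2, Rpow_mult_distr, block_height_sqr by exact H.
  unfold block_count. replace (Nat.min k m) with m by lia.
  assert (0 < INR (S m - n)) by (apply lt_0_INR; lia). field; lra.
Qed.

Lemma rhaly_block_l2 n m : (n <= m)%nat -> l2 (rhaly alpha (block n m)).
Proof. intros H. apply (l2_le _ alpha (INR (S m - n))); auto. intros; apply rhaly_block_Cnorm2_le, H. Qed.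

Lemma rhaly_block_sqnorm_ge n m : (n <= m)%nat ->
  INR (S m - n) * tail2 alpha m <= sqnorm (rhaly alpha (block n m)).
Proof.
  intros H. rewrite sqnorm_Cnorm2, tail2_Cnorm2, <- Series_scal_l.
  rewrite <- (Series_cut (fun k => INR (S m - n) * Cnorm2 (alpha k)) m).
  apply Series_le_ex.
  - intros k. destruct (Nat.ltb_spec k m); [apply Cnorm2_ge_0 | rewrite rhaly_block_Cnorm2_ge; auto; lra].
  - apply ex_series_cut, (ex_series_scal_l _ _ (proj1 (l2_Cnorm2 _) alpha_l2)).
  - apply l2_Cnorm2, rhaly_block_l2, H.
Qed.

Lemma rhaly_block_tail_le n m N :
  (n <= m)%nat -> ex_series (fun k => if (k <? N)%nat then 0 else Cnorm2 (rhaly alpha (block n m) k)) /\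
  Series (fun k => if (k <? N)%nat then 0 else Cnorm2 (rhaly alpha (block n m) k))
    <= INR (S m - n) * tail2 alpha N.
Proof.
  intros H. pose proof (proj1 (l2_Cnorm2 _) (rhaly_block_l2 n m H)) as Hex.
  split; [apply ex_series_cut, Hex|].
  rewrite Series_cut, tail2_Cnorm2, <- Series_scal_l. apply Series_le_ex.
  - intros; apply rhaly_block_Cnorm2_le, H.
  - apply (ex_series_incr_n (fun k => Cnorm2 (rhaly alpha (block n m) k)) N), Hex.
  - apply (ex_series_scal_l _ _ (tail2_ex alpha alpha_l2 N)).
Qed.

(* For [m < n'], [R_alpha (block n' m')] vanishes below [n'] while the tail of
   [R_alpha (block n m)] beyond [n'] is controlled by [tail2 alpha n']. *)
Lemma rhaly_block_pair_ge n m n' m' eta : (n <= m)%nat -> (m < n')%nat -> (n' <= m')%nat -> 0 < eta ->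
  sqnorm (rhaly alpha (block n m)) + (1 - eta) * sqnorm (rhaly alpha (block n' m'))
    - (2 + / eta) * (INR (S m - n) * tail2 alpha n')
  <= sqnorm (rhaly alpha (seq_sub (block n m) (block n' m'))).
Proof.
  intros H1 H2 H3 Heta.
  set (x := rhaly alpha (block n m)); set (y := rhaly alpha (block n' m')).
  set (cut := fun k => if (k <? n')%nat then 0 else Cnorm2 (x k)).
  destruct (rhaly_block_tail_le n m n' H1) as [Hcut_ex Hcut]. fold x cut in Hcut_ex, Hcut.
  assert (Hx : l2 x) by (apply rhaly_block_l2; lia); assert (Hy : l2 y) by (apply rhaly_block_l2; lia).
  apply l2_Cnorm2 in Hx, Hy.
  pose proof (ex_series_scal_l (1 - eta) _ Hy) as Hy'.
  pose proof (ex_series_scal_l (- (2 + / eta)) _ Hcut_ex) as Hcut'.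
  assert (Hpt : forall k, Cnorm2 (x k) + ((1 - eta) * Cnorm2 (y k) + - (2 + / eta) * cut k)
                          <= Cnorm2 (seq_sub x y k)).
  { intros k. unfold cut, seq_sub. destruct (Nat.ltb_spec k n').
    - unfold y. rewrite rhaly_block_lt by exact H. rewrite Cnorm2_0.
      replace (Cminus (x k) (RtoC 0)) with (x k) by (apply C_ext; simpl; ring). lra.
    - pose proof (Cnorm2_sub_ge_eps (x k) (y k) eta Heta). lra. }
  rewrite rhaly_sub. fold x y.
  apply Rle_trans with (Series (fun k => Cnorm2 (x k) + ((1 - eta) * Cnorm2 (y k) + - (2 + / eta) * cut k))).
  - rewrite !Series_plus, !Series_scal_l, !sqnorm_Cnorm2 by (auto || apply (ex_series_plus _ _ Hy' Hcut')).
    assert ((2 + / eta) * Series cut <= (2 + / eta) * (INR (S m - n) * tail2 alpha n')).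
    { apply Rmult_le_compat_l; [pose proof (Rinv_0_lt_compat _ Heta); lra | exact Hcut]. }
    lra.
  - rewrite sqnorm_Cnorm2. apply Series_le_ex; [exact Hpt | |].
    + apply (ex_series_plus _ _ Hx (ex_series_plus _ _ Hy' Hcut')).
    + apply l2_Cnorm2, l2_sub; apply l2_Cnorm2; assumption.
Qed.

End Blocks.

(* Compactness in Cauchy form: this is what finite-rank operators provide without appealing
   to the completeness of l^2. *)
Definition Cauchy_compact (Q : op) : Prop :=
  (forall f, l2 f -> l2 (Q f)) /\
  (forall f g, l2 f -> l2 g -> Q (seq_sub f g) = seq_sub (Q f) (Q g)) /\
  forall u : nat -> seqC, (forall j, l2 (u j) /\ sqnorm (u j) <= 1) ->
    exists phi : nat -> nat, (forall j, (phi j < phi (S j))%nat) /\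
      forall eps, 0 < eps -> exists N, forall a b, (N <= a)%nat -> (N <= b)%nat ->
        sqnorm (seq_sub (Q (u (phi a))) (Q (u (phi b)))) <= eps.

Lemma Cauchy_compact_close_pair Q u eps : Cauchy_compact Q ->
  (forall j, l2 (u j) /\ sqnorm (u j) <= 1) -> 0 < eps ->
  exists j j', (j < j')%nat /\ sqnorm (Q (seq_sub (u j) (u j'))) <= eps.
Proof.
  intros [_ [HQsub HQ]] Hu Heps. destruct (HQ u Hu) as [phi [Hphi Hc]].
  destruct (Hc eps Heps) as [N HN]. exists (phi N), (phi (S N)). split; [apply Hphi|].
  rewrite HQsub by apply Hu. apply HN; lia.
Qed.

Section LowerBound.

Variable alpha : seqC.
Hypothesis alpha_l2 : l2 alpha.

Lemma J_gt_block (L : R) n : 0 < L -> Rbar_lt (Finite L) (J alpha n) ->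
  exists m, (n <= m)%nat /\ L ^ 2 < INR (S m - n) * tail2 alpha m.
Proof.
  intros HL HJ. apply NNPP. intros Hno. apply (Rbar_lt_not_le _ _ HJ), J_le. intros m Hm.
  replace (m + 1 - n)%nat with (S m - n)%nat by lia.
  pose proof (pos_INR (S m - n)); pose proof (tail2_ge_0 alpha alpha_l2 m).
  rewrite <- sqrt_mult by assumption. rewrite <- (sqrt_pow2 L) by lra.
  apply sqrt_le_1_alt. apply Rnot_lt_le. intros Hlt. apply Hno. exists m; auto.
Qed.

Lemma separated_blocks (L tau : R) : 0 < L -> 0 < tau ->
  (forall n, Rbar_lt (Finite L) (J alpha n)) ->
  exists ns ms : nat -> nat,
    (forall j, (ns j <= ms j)%nat) /\
    (forall j j', (j < j')%nat -> (ms j < ns j')%nat) /\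
    (forall j, L ^ 2 < INR (S (ms j) - ns j) * tail2 alpha (ms j)) /\
    (forall j j', (j < j')%nat -> INR (S (ms j)) * tail2 alpha (ns j') <= tau).
Proof.
  intros HL Htau HJ.
  destruct (functional_choice _ (fun n => J_gt_block L n HL (HJ n))) as [fm Hfm].
  assert (HN : forall m, exists N, (m < N)%nat /\
            forall N', (N <= N')%nat -> INR (S m) * tail2 alpha N' <= tau).
  { intros m. assert (0 < INR (S m)) by (apply lt_0_INR; lia).
    destruct (tail2_small alpha alpha_l2 (tau / INR (S m))) as [N0 HN0];
      [apply Rdiv_lt_0_compat; auto|].
    exists (Nat.max N0 (S m)). split; [lia|]. intros N' HN'.
    specialize (HN0 N' ltac:(lia)). apply Rmult_le_compat_l with (r := INR (S m)) in HN0; [|lra].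
    replace (INR (S m) * (tau / INR (S m))) with tau in HN0 by (field; lra). exact HN0. }
  destruct (functional_choice _ HN) as [fN HfN].
  set (ns := fix ns j := match j with O => O | S j' => fN (fm (ns j')) end).
  assert (Hstep : forall j, (ns j <= fm (ns j) < ns (S j))%nat).
  { intros j. split; [apply Hfm | apply HfN]. }
  assert (Hmono : forall j j', (j < j')%nat -> (ns (S j) <= ns j')%nat).
  { intros j j' H. induction H; [lia|]. pose proof (Hstep m). lia. }
  exists ns, (fun j => fm (ns j)). split; [|split; [|split]].
  - intros j. apply Hstep.
  - intros j j' H. pose proof (Hstep j). pose proof (Hmono j j' H). lia.
  - intros j. apply Hfm.
  - intros j j' H. apply HfN, Hmono, H.
Qed.

Lemma Jlim_gt (M : R) : Rbar_lt (Finite M) (Jlim alpha) ->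
  exists L, M < L /\ forall n, Rbar_lt (Finite L) (J alpha n).
Proof.
  intros HM. destruct (Jlim alpha) as [J0| |] eqn:E; [|exists (M + 1)|contradiction].
  - exists ((M + J0) / 2). simpl in HM. split; [lra|]. intros n.
    eapply Rbar_lt_le_trans; [|apply Jlim_le_J]. rewrite E. simpl. lra.
  - split; [lra|]. intros n. eapply Rbar_lt_le_trans; [|apply Jlim_le_J]. rewrite E. exact I.
Qed.

(* Two far-apart blocks [u], [u'] give [||R_alpha (u - u')||^2 >= (2 - eta) L^2 - o(1)],
   while [||u - u'||^2 <= 2]; an approximation [Q] within [M < L] with Cauchy images
   would make it [<= 2 (1 + eta) M^2 + o(1)]. *)
Lemma Jlim_le_dist_Cauchy_compact Q M : Cauchy_compact Q -> 0 <= M ->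
  op_bounded_by (op_sub (rhaly alpha) Q) M -> Rbar_le (Jlim alpha) (Finite M).
Proof.
  intros HQ HM HRQ. destruct (Rbar_le_dec (Jlim alpha) (Finite M)) as [|Hgt]; [assumption|].
  exfalso. apply Rbar_not_le_lt, Jlim_gt in Hgt. destruct Hgt as [L [HML HL]].
  set (delta := L ^ 2 - M ^ 2). assert (Hdelta : 0 < delta) by (unfold delta; nra).
  set (eta := delta / (2 * (L ^ 2 + 2 * M ^ 2 + 1))).
  assert (Heta : 0 < eta) by (apply Rdiv_lt_0_compat; nra).
  assert (Heta_small : eta * (L ^ 2 + 2 * M ^ 2) <= delta / 2 /\ eta <= 1).
  { unfold eta. split; apply Rmult_le_reg_r with (2 * (L ^ 2 + 2 * M ^ 2 + 1)); try nra;
      field_simplify; unfold delta; nra. }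
  assert (Hinv : 0 < / eta) by (apply Rinv_0_lt_compat, Heta).
  set (tau := delta / (4 * (2 + / eta))); set (eps := delta / (4 * (1 + / eta))).
  destruct (separated_blocks L tau) as [ns [ms [Hnm [Hsep [Hbig Htail]]]]];
    [lra | apply Rdiv_lt_0_compat; lra | exact HL |].
  set (u := fun j => block (ns j) (ms j)).
  destruct (Cauchy_compact_close_pair Q u eps HQ) as [j [j' [Hjj HQh]]];
    [intros; apply block_l2, Hnm | apply Rdiv_lt_0_compat; lra |].
  set (h := seq_sub (u j) (u j')).
  destruct (block_pair_l2 (ns j) (ms j) (ns j') (ms j')) as [Hh Hh2]; auto.
  change (l2 h) in Hh; change (sqnorm h <= 2) in Hh2.
  pose proof (sqnorm_le_of_approx _ Q M h eta Heta HM HRQ (proj1 HQ) Hh) as Hupper.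
  assert ((1 + eta) * (M ^ 2 * sqnorm h) <= (1 + eta) * (M ^ 2 * 2))
    by (apply Rmult_le_compat_l, Rmult_le_compat_l; nra).
  assert ((1 + / eta) * sqnorm (Q h) <= delta / 4).
  { replace (delta / 4) with ((1 + / eta) * eps) by (unfold eps; field; lra).
    apply Rmult_le_compat_l; [lra | exact HQh]. }
  pose proof (rhaly_block_pair_ge alpha alpha_l2 (ns j) (ms j) (ns j') (ms j') eta
                (Hnm j) (Hsep j j' Hjj) (Hnm j') Heta) as Hlower. fold (u j) (u j') h in Hlower.
  assert (Hbig' : forall i, L ^ 2 < sqnorm (rhaly alpha (u i)))
    by (intros i; eapply Rlt_le_trans; [apply Hbig | apply rhaly_block_sqnorm_ge, Hnm; exact alpha_l2]).
  assert ((1 - eta) * L ^ 2 <= (1 - eta) * sqnorm (rhaly alpha (u j')))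
    by (apply Rmult_le_compat_l; [lra | left; apply Hbig']).
  pose proof (Hbig' j).
  assert (HC : (2 + / eta) * (INR (S (ms j) - ns j) * tail2 alpha (ns j')) <= delta / 4).
  { replace (delta / 4) with ((2 + / eta) * tau) by (unfold tau; field; lra).
    apply Rmult_le_compat_l; [lra|]. eapply Rle_trans; [|exact (Htail j j' Hjj)].
    apply Rmult_le_compat_r; [apply tail2_ge_0, alpha_l2 | apply le_INR; lia]. }
  fold (u j) (u j') in *. unfold delta in *. lra.
Qed.

End LowerBound.

(** * Diagonal extraction *)

Definition incr_seq (s : nat -> nat) : Prop := forall j, (s j < s (S j))%nat.

Definition converges_fast (y : nat -> R) (s : nat -> nat) : Prop :=
  exists l, forall j, Rabs (y (s j) - l) <= / INR (S j).

Lemma incr_seq_ge s : incr_seq s -> forall j, (j <= s j)%nat.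
Proof. intros H j. induction j; [lia|]. specialize (H j). lia. Qed.

Lemma incr_seq_le s : incr_seq s -> forall a b, (a <= b)%nat -> (s a <= s b)%nat.
Proof. intros H a b Hab. induction Hab; [lia|]. specialize (H m). lia. Qed.

Lemma incr_seq_lt s : incr_seq s -> forall a b, (a < b)%nat -> (s a < s b)%nat.
Proof. intros H a b Hab. induction Hab; [apply H|]. specialize (H m). lia. Qed.

Lemma Bolzano_Weierstrass_fast (y : nat -> R) C :
  (forall j, Rabs (y j) <= C) -> exists s, incr_seq s /\ converges_fast y s.
Proof.
  intros HC. destruct (Bolzano_Weierstrass y (fun c => - C <= c <= C) (compact_P3 (- C) C)) as [l Hl].
  { intros n. apply Rabs_le_between, HC. }
  assert (Hclose : forall N k, exists p, (N <= p)%nat /\ Rabs (y p - l) < / INR (S k)).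
  { intros N k. assert (Hk : 0 < / INR (S k)) by (apply Rinv_0_lt_compat, lt_0_INR; lia).
    destruct (Hl (disc l (mkposreal _ Hk)) N) as [p [Hp Hv]];
      [exists (mkposreal _ Hk); intros z Hz; exact Hz | exists p; split; assumption]. }
  destruct (functional_choice (fun Nk p => (fst Nk <= p)%nat /\ Rabs (y p - l) < / INR (S (snd Nk))))
    as [c Hc]; [intros [N k]; apply Hclose|].
  set (s := fix s j := match j with O => c (0, 0)%nat | S j' => c (S (s j'), S j') end).
  exists s. split.
  - intros j. simpl. destruct (Hc (S (s j), S j)). simpl in *. lia.
  - exists l. intros j. destruct j; left; apply (Hc (_, _)).
Qed.

Lemma select_subseq (y : nat -> R) :
  { s | incr_seq s /\ ((exists C, forall j, Rabs (y j) <= C) -> converges_fast y s) }.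
Proof.
  apply constructive_indefinite_description.
  destruct (classic (exists C, forall j, Rabs (y j) <= C)) as [[C HC]|Hno].
  - destruct (Bolzano_Weierstrass_fast y C HC) as [s [H1 H2]]. exists s; auto.
  - exists (fun j => j). split; [intros j; lia | intros H; contradiction].
Qed.

(* [nested_subseq x i] is a subsequence of [nested_subseq x (i - 1)] along which [x i] converges. *)
Fixpoint nested_subseq (x : nat -> nat -> R) (i : nat) : nat -> nat :=
  match i with
  | O => proj1_sig (select_subseq (x O))
  | S i' => fun j => nested_subseq x i'
                       (proj1_sig (select_subseq (fun j' => x (S i') (nested_subseq x i' j'))) j)
  end.

Definition diagonal_subseq (x : nat -> nat -> R) (j : nat) : nat := nested_subseq x j j.

Section Diagonal.

Variables (x : nat -> nat -> R) (C : nat -> R).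
Hypothesis x_bounded : forall i j, Rabs (x i j) <= C i.

Lemma nested_subseq_incr i : incr_seq (nested_subseq x i).
Proof.
  induction i; simpl; [apply (proj2_sig (select_subseq _))|].
  intros j. apply incr_seq_lt; auto. apply (proj2_sig (select_subseq _)).
Qed.

Lemma nested_subseq_converges i : converges_fast (x i) (nested_subseq x i).
Proof.
  destruct i; [apply (proj2 (proj2_sig (select_subseq (x 0%nat)))) |
    apply (proj2 (proj2_sig (select_subseq (fun j' => x (S i) (nested_subseq x i j')))))];
    eexists; intros; apply x_bounded.
Qed.

Lemma nested_subseq_sub i d : exists sigma, (forall j, (j <= sigma j)%nat) /\
  forall j, nested_subseq x (i + d) j = nested_subseq x i (sigma j).
Proof.
  induction d.
  - exists (fun j => j). split; [auto|]. intros; rewrite Nat.add_0_r; reflexivity.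
  - destruct IHd as [sg [H1 H2]]. rewrite Nat.add_succ_r.
    set (s := proj1_sig (select_subseq (fun j' => x (S (i + d)) (nested_subseq x (i + d) j')))).
    exists (fun j => sg (s j)). split.
    + intros j. pose proof (incr_seq_ge s (proj1 (proj2_sig (select_subseq _))) j).
      specialize (H1 (s j)). lia.
    + intros j. simpl. rewrite H2. reflexivity.
Qed.

Lemma diagonal_subseq_incr : incr_seq (diagonal_subseq x).
Proof.
  intros j. unfold diagonal_subseq. simpl.
  set (s := proj1_sig (select_subseq (fun j' => x (S j) (nested_subseq x j j')))).
  pose proof (incr_seq_ge s (proj1 (proj2_sig (select_subseq _))) (S j)) as Hs.
  pose proof (incr_seq_le _ (nested_subseq_incr j) _ _ Hs). pose proof (nested_subseq_incr j j). lia.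
Qed.

Lemma diagonal_subseq_converges i :
  exists l, forall j, (i <= j)%nat -> Rabs (x i (diagonal_subseq x j) - l) <= / INR (S j).
Proof.
  destruct (nested_subseq_converges i) as [l Hl]. exists l. intros j Hj. unfold diagonal_subseq.
  destruct (nested_subseq_sub i (j - i)) as [sg [H1 H2]].
  replace (i + (j - i))%nat with j in H2 by lia. rewrite H2.
  eapply Rle_trans; [apply Hl|]. apply Rinv_le_contravar; [apply lt_0_INR; lia|].
  apply le_INR. specialize (H1 j). lia.
Qed.

End Diagonal.

Lemma diagonal_extraction (x : nat -> nat -> R) (C : nat -> R) :
  (forall i j, Rabs (x i j) <= C i) ->
  exists (phi : nat -> nat) (lim : nat -> R), incr_seq phi /\
    forall i j, (i <= j)%nat -> Rabs (x i (phi j) - lim i) <= / INR (S j).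
Proof.
  intros Hx. destruct (functional_choice _ (diagonal_subseq_converges x C Hx)) as [lim Hlim].
  exists (diagonal_subseq x), lim. split; [apply diagonal_subseq_incr | exact Hlim].
Qed.

(** * Finite-rank operators have Cauchy images of bounded sequences *)

(* [l^2] as a real Hilbert space: [rinner] is the real part of the complex inner product. *)
Definition rinner_term (f g : seqC) (k : nat) : R := fst (f k) * fst (g k) + snd (f k) * snd (g k).

Definition rinner (f g : seqC) : R := Series (rinner_term f g).

Definition rscale (r : R) (f : seqC) : seqC := fun k => (r * fst (f k), r * snd (f k)).

Definition rcomb (a : nat -> R) (e : nat -> seqC) (K : nat) : seqC :=
  fun k => (sum_n (fun l => a l * fst (e l k)) K, sum_n (fun l => a l * snd (e l k)) K).

Lemma rinner_term_abs_le f g k : Rabs (rinner_term f g k) <= (Cnorm2 (f k) + Cnorm2 (g k)) / 2.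
Proof.
  unfold rinner_term, Cnorm2. destruct (f k) as [a b], (g k) as [c d]; simpl.
  pose proof (pow2_ge_0 (a - c)); pose proof (pow2_ge_0 (b - d)).
  pose proof (pow2_ge_0 (a + c)); pose proof (pow2_ge_0 (b + d)).
  apply Rabs_le. split; nra.
Qed.

Lemma ex_series_Cnorm2_mean f g : l2 f -> l2 g ->
  ex_series (fun k => (Cnorm2 (f k) + Cnorm2 (g k)) / 2) /\
  Series (fun k => (Cnorm2 (f k) + Cnorm2 (g k)) / 2) = (sqnorm f + sqnorm g) / 2.
Proof.
  intros Hf Hg. apply l2_Cnorm2 in Hf, Hg.
  pose proof (ex_series_scal_l (/ 2) _ (ex_series_plus _ _ Hf Hg)) as Hex.
  split.
  { eapply ex_series_ext; [|exact Hex]. intros k.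
    change (/ 2 * (Cnorm2 (f k) + Cnorm2 (g k)) = (Cnorm2 (f k) + Cnorm2 (g k)) / 2).
    unfold Rdiv; ring. }
  rewrite (Series_ext _ (fun k => / 2 * (Cnorm2 (f k) + Cnorm2 (g k)))) by (intros; unfold Rdiv; ring).
  rewrite Series_scal_l, Series_plus, !sqnorm_Cnorm2 by assumption. field.
Qed.

Lemma rinner_ex f g : l2 f -> l2 g -> ex_series (rinner_term f g).
Proof.
  intros Hf Hg. apply ex_series_Rabs.
  apply (ex_series_le_nonneg _ _ (fun k => conj (Rabs_pos _) (rinner_term_abs_le f g k))).
  apply ex_series_Cnorm2_mean; assumption.
Qed.

Lemma rinner_abs_le f g : l2 f -> l2 g -> Rabs (rinner f g) <= (sqnorm f + sqnorm g) / 2.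
Proof.
  intros Hf Hg. destruct (ex_series_Cnorm2_mean f g Hf Hg) as [Hex Hmean].
  pose proof (ex_series_le_nonneg _ _ (fun k => conj (Rabs_pos _) (rinner_term_abs_le f g k)) Hex).
  rewrite <- Hmean. eapply Rle_trans; [apply Series_Rabs; assumption|].
  apply Series_le_ex; auto. apply rinner_term_abs_le.
Qed.

Lemma rinner_sym f g : rinner f g = rinner g f.
Proof. apply Series_ext. intros; unfold rinner_term; ring. Qed.

Lemma rinner_self f : rinner f f = sqnorm f.
Proof. rewrite sqnorm_Cnorm2. apply Series_ext. intros; unfold rinner_term, Cnorm2; ring. Qed.

Lemma rinner_0_l f g : (forall k, f k = RtoC 0) -> rinner f g = 0.
Proof.
  intros H. unfold rinner. rewrite (Series_ext _ (fun _ => 0)); [apply Series_0|].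
  intros k. unfold rinner_term. rewrite H. simpl. ring.
Qed.

Lemma rinner_ext_l f f' g : (forall k, f k = f' k) -> rinner f g = rinner f' g.
Proof. intros H. apply Series_ext. intros; unfold rinner_term; rewrite H; reflexivity. Qed.

Lemma l2_rscale r f : l2 f -> l2 (rscale r f).
Proof. apply (l2_le _ f (r ^ 2)). intros k. unfold rscale, Cnorm2; simpl. right; ring. Qed.

Lemma rinner_rscale_l r f g : rinner (rscale r f) g = r * rinner f g.
Proof.
  unfold rinner. rewrite <- Series_scal_l. apply Series_ext. intros; unfold rinner_term, rscale; simpl; ring.
Qed.

Lemma rinner_sub_l f h g : l2 f -> l2 h -> l2 g -> rinner (seq_sub f h) g = rinner f g - rinner h g.
Proof.
  intros Hf Hh Hg. unfold rinner. rewrite <- Series_minus by (apply rinner_ex; auto).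
  apply Series_ext. intros; unfold rinner_term, seq_sub, Cminus, Copp, Cplus; simpl; ring.
Qed.

Lemma rcomb_0 a e k : rcomb a e 0 k = rscale (a 0%nat) (e 0%nat) k.
Proof. apply C_ext; simpl; apply sum_n0. Qed.

Lemma rcomb_S a e K k : rcomb a e (S K) k = Cplus (rcomb a e K k) (rscale (a (S K)) (e (S K)) k).
Proof. apply C_ext; simpl; apply sum_nS. Qed.

Lemma rcomb_sub a b e K k :
  seq_sub (rcomb a e K) (rcomb b e K) k = rcomb (fun l => a l - b l) e K k.
Proof.
  unfold seq_sub. induction K.
  - rewrite !rcomb_0. apply C_ext; simpl; ring.
  - rewrite !rcomb_S, <- IHK. apply C_ext; simpl; ring.
Qed.

Lemma l2_rcomb a e K : (forall l, (l <= K)%nat -> l2 (e l)) -> l2 (rcomb a e K).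
Proof.
  intros H. induction K.
  - apply (l2_ext (rscale (a 0%nat) (e 0%nat))); [apply rcomb_0 | apply l2_rscale; auto].
  - apply (l2_ext (seq_add (rcomb a e K) (rscale (a (S K)) (e (S K))))); [intros; apply rcomb_S|].
    apply l2_add; [apply IHK; auto | apply l2_rscale; auto].
Qed.

Lemma rinner_rcomb_l a e K g : (forall l, (l <= K)%nat -> l2 (e l)) -> l2 g ->
  rinner (rcomb a e K) g = sum_n (fun l => a l * rinner (e l) g) K.
Proof.
  intros H Hg. induction K.
  - rewrite sum_n0, (rinner_ext_l _ (rscale (a 0%nat) (e 0%nat))) by apply rcomb_0.
    apply rinner_rscale_l.
  - rewrite sum_nS, <- IHK by auto.
    rewrite (rinner_ext_l _ (seq_add (rcomb a e K) (rscale (a (S K)) (e (S K))))) by apply rcomb_S.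
    assert (Hc : l2 (rcomb a e K)) by (apply l2_rcomb; auto).
    assert (Hs : l2 (rscale (a (S K)) (e (S K)))) by (apply l2_rscale; auto).
    rewrite <- rinner_rscale_l. unfold rinner. rewrite <- Series_plus by (apply rinner_ex; assumption).
    apply Series_ext; intros; unfold rinner_term, seq_add, rscale; simpl; ring.
Qed.

Lemma sqnorm_rcomb_le d e K : (forall l, (l <= K)%nat -> l2 (e l)) ->
  sqnorm (rcomb d e K) <= INR (S K) * sum_n (fun l => d l ^ 2 * sqnorm (e l)) K.
Proof.
  intros H. set (h := fun l k => if (l <=? K)%nat then d l ^ 2 * Cnorm2 (e l k) else 0).
  assert (Hh : forall l, ex_series (h l)).
  { intros l. unfold h. destruct (Nat.leb_spec l K); [|apply Series_0].
    apply (ex_series_scal_l _ _ (proj1 (l2_Cnorm2 _) (H l ltac:(lia)))). }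
  assert (HS : Series (fun k => sum_n (fun l => h l k) K) = sum_n (fun l => d l ^ 2 * sqnorm (e l)) K).
  { rewrite Series_sum_n by exact Hh. apply sum_n_extR. intros l Hl. unfold h.
    destruct (Nat.leb_spec l K); [|lia]. rewrite sqnorm_Cnorm2, Series_scal_l. reflexivity. }
  rewrite <- HS, <- Series_scal_l, sqnorm_Cnorm2. apply Series_le_ex.
  - intros k. unfold rcomb, Cnorm2. simpl fst; simpl snd.
    pose proof (Cauchy_Schwarz_count (fun l => d l * fst (e l k)) K).
    pose proof (Cauchy_Schwarz_count (fun l => d l * snd (e l k)) K).
    replace (sum_n (fun l => h l k) K) with
      (sum_n (fun i => (d i * fst (e i k)) ^ 2) K + sum_n (fun i => (d i * snd (e i k)) ^ 2) K).
    + lra.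
    + rewrite <- sum_n_plusR. apply sum_n_extR. intros l Hl. unfold h, Cnorm2.
      destruct (Nat.leb_spec l K); [ring | lia].
  - apply l2_Cnorm2, l2_rcomb, H.
  - apply (ex_series_scal_l _ _ (ex_series_sum_n h K Hh)).
Qed.

Definition rspan (e : nat -> seqC) (n : nat) (w : seqC) : Prop :=
  exists b, forall k, w k = rcomb b e n k.

Lemma rspan_S e n w : rspan e n w -> rspan e (S n) w.
Proof.
  intros [b Hb]. exists (fun j => if (j <=? n)%nat then b j else 0). intros k.
  rewrite Hb, rcomb_S. unfold rscale. replace (S n <=? n)%nat with false by (symmetry; apply Nat.leb_gt; lia).
  apply C_ext; simpl; rewrite Rmult_0_l, Rplus_0_r;
    apply sum_n_extR; intros j Hj; (destruct (Nat.leb_spec j n); [reflexivity | lia]).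
Qed.

Lemma rspan_rcomb e n x a K : (forall i, (i <= K)%nat -> rspan e n (x i)) -> rspan e n (rcomb a x K).
Proof.
  intros Hx.
  destruct (functional_choice (fun i b => (i <= K)%nat -> forall k, x i k = rcomb b e n k)) as [beta Hbeta].
  { intros i. destruct (Nat.le_gt_cases i K) as [Hi|Hi].
    - destruct (Hx i Hi) as [b Hb]. exists b; auto.
    - exists (fun _ => 0). intros; lia. }
  exists (fun j => sum_n (fun i => a i * beta i j) K). intros k.
  unfold rcomb at 1. apply C_ext; simpl;
    rewrite (sum_n_extR _ (fun i => sum_n (fun j => a i * beta i j * _ (e j k)) n))
      by (intros i Hi; rewrite (Hbeta i Hi k); simpl; rewrite <- sum_n_scalR; apply sum_n_extR; intros; ring);
    rewrite sum_n_switch; apply sum_n_extR; intros j _;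
    rewrite (Rmult_comm _ (_ (e j k))), <- sum_n_scalR; apply sum_n_extR; intros; ring.
Qed.

Definition unit_or_zero (e : seqC) : Prop := (forall k, e k = RtoC 0) \/ rinner e e = 1.

Definition orthonormal_upto (e : nat -> seqC) (n : nat) : Prop :=
  (forall i, (i <= n)%nat -> unit_or_zero (e i)) /\
  (forall i j, (i <= n)%nat -> (j <= n)%nat -> i <> j -> rinner (e i) (e j) = 0).

Lemma rinner_rcomb_orthonormal e n b m : (forall l, l2 (e l)) -> orthonormal_upto e n -> (m <= n)%nat ->
  rinner (rcomb b e n) (e m) = b m * rinner (e m) (e m).
Proof.
  intros He [_ Horth] Hm. rewrite rinner_rcomb_l by auto.
  apply (sum_n_single (fun l => b l * rinner (e l) (e m))); [exact Hm|].
  intros i Hi Him. rewrite Horth by auto. ring.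
Qed.

Lemma rspan_orthonormal_coeffs e n w : (forall l, l2 (e l)) -> orthonormal_upto e n ->
  rspan e n w -> forall k, w k = rcomb (fun j => rinner w (e j)) e n k.
Proof.
  intros He Hon [b Hw] k. rewrite Hw. apply C_ext; simpl; apply sum_n_extR; intros j Hj;
    rewrite (rinner_ext_l w (rcomb b e n)), rinner_rcomb_orthonormal by auto;
    destruct (proj1 Hon j Hj) as [Hz|Hu]; try (rewrite Hz; simpl; ring); rewrite Hu; ring.
Qed.

Definition normalize (r : seqC) : seqC :=
  if Req_EM_T (sqnorm r) 0 then (fun _ => RtoC 0) else rscale (/ sqrt (sqnorm r)) r.

Lemma l2_normalize r : l2 r -> l2 (normalize r).
Proof. intros H. unfold normalize. destruct (Req_EM_T (sqnorm r) 0); [apply l2_0 | apply l2_rscale, H]. Qed.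

Lemma normalize_unit_or_zero r : l2 r -> unit_or_zero (normalize r).
Proof.
  intros H. unfold normalize, unit_or_zero. destruct (Req_EM_T (sqnorm r) 0) as [|Hn]; [left; reflexivity|].
  right. pose proof (sqnorm_ge_0 r H). assert (Hpos : 0 < sqnorm r) by lra.
  rewrite rinner_rscale_l, rinner_sym, rinner_rscale_l, rinner_self.
  pose proof (sqrt_sqrt _ (Rlt_le _ _ Hpos)). pose proof (sqrt_lt_R0 _ Hpos).
  set (s := sqrt (sqnorm r)) in *. rewrite <- H1. field. lra.
Qed.

Lemma normalize_rspan r : l2 r -> rspan (fun _ => normalize r) 0 r.
Proof.
  intros H. unfold normalize. destruct (Req_EM_T (sqnorm r) 0) as [H0|Hn].
  - exists (fun _ => 0). intros k. rewrite (sqnorm_eq_0 _ H H0 k), rcomb_0.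
    apply C_ext; simpl; ring.
  - exists (fun _ => sqrt (sqnorm r)). intros k. rewrite rcomb_0. unfold rscale.
    pose proof (sqnorm_ge_0 r H). assert (0 < sqrt (sqnorm r)) by (apply sqrt_lt_R0; lra).
    apply C_ext; simpl; field; lra.
Qed.

Lemma rinner_normalize_r f r : rinner f r = 0 -> rinner f (normalize r) = 0.
Proof.
  intros H. unfold normalize. destruct (Req_EM_T (sqnorm r) 0).
  - rewrite rinner_sym. apply rinner_0_l. reflexivity.
  - rewrite rinner_sym, rinner_rscale_l, rinner_sym, H. ring.
Qed.

Section GramSchmidt.

Variable x : nat -> seqC.
Hypothesis x_l2 : forall l, l2 (x l).

(* [gs_upto n i] is the [i]-th Gram-Schmidt vector for [i <= n]. *)
Fixpoint gs_upto (n : nat) : nat -> seqC :=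
  match n with
  | O => fun _ => normalize (x O)
  | S n' => fun i => if (i <=? n')%nat then gs_upto n' i
             else normalize (seq_sub (x (S n'))
                    (rcomb (fun i => rinner (x (S n')) (gs_upto n' i)) (gs_upto n') n'))
  end.

Definition gram_schmidt (l : nat) : seqC := gs_upto l l.

Lemma gs_upto_stable n i : (i <= n)%nat -> gs_upto n i = gram_schmidt i.
Proof.
  induction n; intros H.
  - replace i with 0%nat by lia. reflexivity.
  - destruct (Nat.eq_dec i (S n)) as [->|Hne]; [reflexivity|].
    simpl. destruct (Nat.leb_spec i n); [apply IHn; lia | lia].
Qed.

Definition gs_residual (n : nat) : seqC :=
  seq_sub (x (S n)) (rcomb (fun i => rinner (x (S n)) (gram_schmidt i)) gram_schmidt n).

Lemma gram_schmidt_S n : gram_schmidt (S n) = normalize (gs_residual n).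
Proof.
  unfold gram_schmidt at 1.
  change (gs_upto (S n) (S n)) with (if (S n <=? n)%nat then gs_upto n (S n) else
    normalize (seq_sub (x (S n)) (rcomb (fun i => rinner (x (S n)) (gs_upto n i)) (gs_upto n) n))).
  replace (S n <=? n)%nat with false by (symmetry; apply Nat.leb_gt; lia).
  unfold gs_residual. do 2 f_equal. apply functional_extensionality; intros k.
  apply C_ext; simpl; apply sum_n_extR; intros; rewrite gs_upto_stable; auto.
Qed.

Lemma l2_gram_schmidt i : l2 (gram_schmidt i).
Proof.
  induction i as [i IH] using (well_founded_induction Wf_nat.lt_wf). destruct i; [apply l2_normalize, x_l2|].
  rewrite gram_schmidt_S. apply l2_normalize, l2_sub; [apply x_l2 | apply l2_rcomb; intros; apply IH; lia].
Qed.

Lemma l2_gs_residual n : l2 (gs_residual n).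
Proof. apply l2_sub; [apply x_l2 | apply l2_rcomb; intros; apply l2_gram_schmidt]. Qed.

Lemma rinner_gs_residual n j : orthonormal_upto gram_schmidt n -> (j <= n)%nat ->
  rinner (gram_schmidt j) (gs_residual n) = 0.
Proof.
  intros Hon Hj. destruct (proj1 Hon j Hj) as [Hz|Hu]; [apply rinner_0_l, Hz|].
  assert (Hgs : forall l, l2 (gram_schmidt l)) by exact l2_gram_schmidt.
  unfold gs_residual. rewrite rinner_sym, rinner_sub_l by (auto using l2_rcomb).
  rewrite rinner_rcomb_orthonormal, Hu, (rinner_sym (x (S n))) by assumption. ring.
Qed.

Lemma rspan_gs_S n : rspan gram_schmidt (S n) (x (S n)).
Proof.
  set (b := fun i => rinner (x (S n)) (gram_schmidt i)).
  destruct (normalize_rspan _ (l2_gs_residual n)) as [c Hc]. rewrite <- gram_schmidt_S in Hc.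
  exists (fun j => if (j <=? n)%nat then b j else c 0%nat). intros k.
  specialize (Hc k). rewrite rcomb_0 in Hc. unfold gs_residual, seq_sub in Hc. fold b in Hc.
  rewrite rcomb_S. replace (S n <=? n)%nat with false by (symmetry; apply Nat.leb_gt; lia).
  replace (rcomb (fun j => if (j <=? n)%nat then b j else c 0%nat) gram_schmidt n k)
    with (rcomb b gram_schmidt n k)
    by (apply C_ext; simpl; apply sum_n_extR; intros j Hj; (destruct (Nat.leb_spec j n); [reflexivity | lia])).
  pose proof (f_equal fst Hc); pose proof (f_equal snd Hc).
  apply C_ext; unfold Cminus, Copp, Cplus in *; simpl in *; lra.
Qed.

Definition gs_invariant (n : nat) : Prop :=
  orthonormal_upto gram_schmidt n /\ forall i, (i <= n)%nat -> rspan gram_schmidt n (x i).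

Lemma gs_invariant_0 : gs_invariant 0.
Proof.
  split; [split|].
  - intros i Hi. replace i with 0%nat by lia. apply normalize_unit_or_zero, x_l2.
  - intros; lia.
  - intros i Hi. replace i with 0%nat by lia. apply normalize_rspan, x_l2.
Qed.

Lemma gs_invariant_S n : gs_invariant n -> gs_invariant (S n).
Proof.
  intros [Hon Hsp].
  assert (Hnew : forall j, (j <= n)%nat -> rinner (gram_schmidt j) (gram_schmidt (S n)) = 0).
  { intros j Hj. rewrite gram_schmidt_S. apply rinner_normalize_r, rinner_gs_residual; auto. }
  split; [split|].
  - intros i Hi. destruct (Nat.eq_dec i (S n)) as [->|].
    + rewrite gram_schmidt_S. apply normalize_unit_or_zero, l2_gs_residual.
    + apply Hon; lia.
  - intros i j Hi Hj Hij. destruct (Nat.eq_dec i (S n)), (Nat.eq_dec j (S n)); subst; try lia.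
    + rewrite rinner_sym. apply Hnew; lia.
    + apply Hnew; lia.
    + apply Hon; lia.
  - intros i Hi. destruct (Nat.eq_dec i (S n)) as [->|]; [apply rspan_gs_S | apply rspan_S, Hsp; lia].
Qed.

Lemma gs_invariant_all n : gs_invariant n.
Proof. induction n; [apply gs_invariant_0 | apply gs_invariant_S, IHn]. Qed.

End GramSchmidt.

Lemma rspan_orthonormal_basis (x : nat -> seqC) K : (forall l, l2 (x l)) ->
  exists e : nat -> seqC, (forall l, l2 (e l)) /\ (forall l, (l <= K)%nat -> sqnorm (e l) <= 1) /\
    forall w, rspan x K w -> forall k, w k = rcomb (fun j => rinner w (e j)) e K k.
Proof.
  intros Hx. destruct (gs_invariant_all x Hx K) as [Hon Hsp].
  exists (gram_schmidt x). split; [|split].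
  - apply l2_gram_schmidt, Hx.
  - intros l Hl. rewrite <- rinner_self.
    destruct (proj1 Hon l Hl) as [Hz|Hu]; [rewrite rinner_0_l by exact Hz; lra | lra].
  - intros w [a Hw]. apply rspan_orthonormal_coeffs; [apply l2_gram_schmidt, Hx | exact Hon |].
    destruct (rspan_rcomb _ _ x a K Hsp) as [b Hb]. exists b. intros k. rewrite Hw. apply Hb.
Qed.

Lemma INR_S_large (A : R) : exists N : nat, forall M, (N <= M)%nat -> A <= INR (S M).
Proof.
  destruct (INR_unbounded A) as [N HN]. exists N. intros M HM. apply le_INR in HM. rewrite S_INR. lra.
Qed.

Lemma Rinv_INR_S_le N j : (N <= j)%nat -> / INR (S j) <= / INR (S N).
Proof. intros H. apply Rinv_le_contravar; [apply lt_0_INR; lia | apply le_INR; lia]. Qed.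

Lemma Rinv_INR_S_le_1 N : / INR (S N) <= 1.
Proof. rewrite <- Rinv_1. apply Rinv_le_contravar; [lra|]. rewrite S_INR. pose proof (pos_INR N). lra. Qed.

Lemma sum_n_pairs (t : nat -> R) n :
  @eq R (sum_n t (2 * n + 1)) (sum_n (fun i => t (2 * i)%nat + t (2 * i + 1)%nat) n).
Proof.
  induction n.
  - simpl. rewrite sum_nS, !sum_n0. reflexivity.
  - replace (2 * S n + 1)%nat with (S (S (2 * n + 1))) by lia. rewrite !sum_nS, IHn.
    replace (S (2 * n + 1)) with (2 * S n)%nat by lia.
    replace (S (2 * S n)) with (2 * S n + 1)%nat by lia. ring.
Qed.

(* A complex span of [v 0, ..., v n] is the real span of the [v i] and the [i * v i]. *)
Lemma finite_rank_rspan P : finite_rank P ->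
  exists (x : nat -> seqC) (K : nat), (forall l, l2 (x l)) /\ forall f, l2 f -> rspan x K (P f).
Proof.
  intros [_ [_ [n [v [Hv Hrange]]]]].
  set (x := fun l k => if Nat.even l then v (Nat.div2 l) k
                       else ((- snd (v (Nat.div2 l) k)), fst (v (Nat.div2 l) k)) : C).
  exists x, (2 * n + 1)%nat. split.
  - intros l. apply (l2_le _ (v (Nat.div2 l)) 1); [|apply Hv].
    intros k. unfold x. destruct (Nat.even l); unfold Cnorm2; simpl; lra.
  - intros f Hf. destruct (Hrange f Hf) as [c Hc].
    exists (fun l => if Nat.even l then fst (c (Nat.div2 l)) else snd (c (Nat.div2 l))). intros k.
    rewrite Hc. unfold rcomb. apply C_ext; rewrite ?fst_sum_n, ?snd_sum_n; cbn [fst snd];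
      rewrite sum_n_pairs; apply sum_n_extR; intros i _; unfold x;
      rewrite Nat.even_even, Nat.div2_double, Nat.even_odd,
        Nat.add_1_r, Nat.div2_succ_double; cbn [fst snd Cmult]; ring.
Qed.

Lemma rcomb_Cauchy_subseq (e : nat -> seqC) (d : nat -> nat -> R) K C :
  (forall l, l2 (e l)) -> (forall l, (l <= K)%nat -> sqnorm (e l) <= 1) ->
  (forall j l, (l <= K)%nat -> Rabs (d j l) <= C) ->
  exists phi, incr_seq phi /\ forall eps, 0 < eps -> exists N, forall a b, (N <= a)%nat -> (N <= b)%nat ->
    sqnorm (seq_sub (rcomb (d (phi a)) e K) (rcomb (d (phi b)) e K)) <= eps.
Proof.
  intros He He1 Hd. set (y := fun l j => if (l <=? K)%nat then d j l else 0).
  destruct (diagonal_extraction y (fun _ => Rmax C 0)) as [phi [lim [Hphi Hlim]]].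
  { intros l j. unfold y. destruct (Nat.leb_spec l K).
    - eapply Rle_trans; [apply Hd; lia | apply Rmax_l].
    - rewrite Rabs_R0. apply Rmax_r. }
  exists phi. split; [exact Hphi|]. intros eps Heps.
  set (SK := INR (S K)). assert (HSK : 0 <= SK) by apply pos_INR.
  destruct (INR_S_large (4 * SK * SK / eps)) as [N0 HN0].
  set (N := Nat.max N0 K). set (rho := / INR (S N)). exists N. intros a b Ha Hb.
  assert (Hrho : 0 < rho) by (apply Rinv_0_lt_compat, lt_0_INR; lia).
  assert (Hcoef : forall l, (l <= K)%nat -> (d (phi a) l - d (phi b) l) ^ 2 <= (2 * rho) ^ 2).
  { intros l Hl. apply pow_maj_Rabs.
    pose proof (Hlim l a ltac:(lia)) as Hla; pose proof (Hlim l b ltac:(lia)) as Hlb.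
    pose proof (Rinv_INR_S_le N a Ha) as Ha'; pose proof (Rinv_INR_S_le N b Hb) as Hb'.
    unfold y in Hla, Hlb. destruct (Nat.leb_spec l K); [|lia].
    replace (d (phi a) l - d (phi b) l) with ((d (phi a) l - lim l) - (d (phi b) l - lim l)) by ring.
    eapply Rle_trans; [apply Rabs_triang|]. rewrite Rabs_Ropp. fold rho in Ha', Hb'. lra. }
  rewrite (sqnorm_ext _ (rcomb (fun l => d (phi a) l - d (phi b) l) e K))
    by (intros k; apply rcomb_sub).
  eapply Rle_trans; [apply sqnorm_rcomb_le; auto|].
  apply Rle_trans with (SK * sum_n (fun _ => (2 * rho) ^ 2) K).
  { apply Rmult_le_compat_l; [exact HSK|]. apply sum_n_le. intros l Hl.
    pose proof (Hcoef l Hl); pose proof (He1 l Hl); pose proof (sqnorm_ge_0 _ (He l)).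
    rewrite <- (Rmult_1_r ((2 * rho) ^ 2)). apply Rmult_le_compat; auto. apply pow2_ge_0. }
  rewrite sum_n_const. fold SK.
  specialize (HN0 N ltac:(unfold N; lia)). fold rho in HN0.
  assert (Hprod : rho * INR (S N) = 1) by (unfold rho; field; apply Rgt_not_eq, lt_0_INR; lia).
  assert (Hrho1 : rho <= 1) by apply Rinv_INR_S_le_1.
  assert (4 * SK * SK <= eps * INR (S N)).
  { apply (Rmult_le_compat_r eps) in HN0; [|lra]. unfold Rdiv in HN0.
    rewrite Rmult_assoc, Rinv_l, Rmult_1_r in HN0 by lra. lra. }
  assert (4 * SK * SK * rho <= eps) by (apply (Rmult_le_compat_r rho) in H; nra).
  assert (0 <= SK * SK) by nra. nra.
Qed.

Lemma finite_rank_Cauchy_compact P : finite_rank P -> Cauchy_compact P.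
Proof.
  intros HP. pose proof HP as [Hlin [[M0 HM0] _]].
  set (M := Rmax M0 0). assert (HM0' : 0 <= M) by apply Rmax_r.
  assert (HM : op_bounded_by P M).
  { intros f Hf. destruct (HM0 f Hf) as [H1 H2]. split; [exact H1|]. eapply Rle_trans; [exact H2|].
    apply Rmult_le_compat_r; [apply sqrt_pos | apply Rmax_l]. }
  assert (HPl : forall f, l2 f -> l2 (P f)) by (intros f Hf; apply (HM f Hf)).
  split; [exact HPl | split].
  - intros f g Hf Hg.
    replace (seq_sub f g) with (seq_add (seq_scal (RtoC (-1)) g) f)
      by (apply functional_extensionality; intros k; apply C_ext; simpl; ring).
    rewrite Hlin by assumption. apply functional_extensionality; intros k. apply C_ext; simpl; ring.
  - intros u Hu. destruct (finite_rank_rspan P HP) as [x [K [Hx Hspan]]].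
    destruct (rspan_orthonormal_basis x K Hx) as [e [He [He1 Hexp]]].
    set (d := fun j l => rinner (P (u j)) (e l)).
    destruct (rcomb_Cauchy_subseq e d K ((M ^ 2 + 1) / 2) He He1) as [phi [Hphi Hc]].
    + intros j l Hl. eapply Rle_trans; [apply rinner_abs_le; [apply HPl, Hu | apply He]|].
      destruct (sqnorm_le_of_op_bounded P M (u j) HM HM0' (proj1 (Hu j))) as [_ HPu].
      pose proof (He1 l Hl). pose proof (proj2 (Hu j)). pose proof (pow2_ge_0 M).
      assert (M ^ 2 * sqnorm (u j) <= M ^ 2)
        by (rewrite <- (Rmult_1_r (M ^ 2)) at 2; apply Rmult_le_compat_l; lra).
      lra.
    + exists phi. split; [exact Hphi|]. intros eps Heps. destruct (Hc eps Heps) as [N HN].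
      exists N. intros a b Ha Hb.
      rewrite (sqnorm_ext _ (seq_sub (rcomb (d (phi a)) e K) (rcomb (d (phi b)) e K))).
      * apply HN; assumption.
      * intros k. unfold seq_sub. rewrite !(Hexp _ (Hspan _ (proj1 (Hu _)))). reflexivity.
Qed.

(** * Compactness *)

Lemma compact_op_Cauchy_compact T : compact_op T ->
  (forall f g, l2 f -> l2 g -> T (seq_sub f g) = seq_sub (T f) (T g)) -> Cauchy_compact T.
Proof.
  intros [HTl HTc] HTsub. split; [exact HTl | split; [exact HTsub|]].
  intros u Hu. destruct (HTc u 1) as [phi [g [Hphi [Hg Hlim]]]].
  { intros j. split; [apply Hu|]. apply l2norm_le_iff; [apply Hu | lra |]. rewrite pow1. apply Hu. }
  exists phi. split; [exact Hphi|]. intros eps Heps.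
  apply is_lim_seq_spec in Hlim.
  destruct (Hlim (mkposreal _ (sqrt_lt_R0 (eps / 4) ltac:(lra)))) as [N HN]. exists N.
  assert (Hclose : forall j, (N <= j)%nat -> sqnorm (seq_sub (T (u (phi j))) g) <= eps / 4).
  { intros j Hj. specialize (HN j Hj). simpl in HN. rewrite Rminus_0_r, Rabs_pos_eq in HN by apply sqrt_pos.
    pose proof (l2_sub _ _ (HTl _ (proj1 (Hu (phi j)))) Hg) as Hl2.
    rewrite <- (pow2_sqrt (eps / 4)) by lra. apply l2norm_le_iff; [exact Hl2 | apply sqrt_pos | lra]. }
  intros a b Ha Hb. eapply Rle_trans; [apply (sqnorm_sub_le _ _ g); auto; apply HTl, Hu|].
  pose proof (Hclose a Ha); pose proof (Hclose b Hb). lra.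
Qed.

Lemma op_sub_self_bounded T : (forall f, l2 f -> l2 (T f)) -> op_bounded_by (op_sub T T) 0.
Proof.
  intros HT. apply op_bounded_by_sqnorm; [lra|]. intros f Hf.
  assert (E : forall k, op_sub T T f k = RtoC 0) by (intros k; apply C_ext; simpl; ring).
  split; [apply (l2_ext (fun _ => RtoC 0)); [exact E | apply l2_0]|].
  rewrite (sqnorm_ext _ (fun _ => RtoC 0)) by exact E.
  rewrite sqnorm_Cnorm2, (Series_ext _ (fun _ => 0)) by (intros; apply Cnorm2_0).
  rewrite (proj2 Series_0). pose proof (sqnorm_ge_0 f Hf). nra.
Qed.

Lemma compact_rhaly_Jlim alpha : l2 alpha -> compact_op (rhaly alpha) -> Jlim alpha = Finite 0.
Proof.
  intros Ha Hc. apply Rbar_le_antisym; [|apply Jlim_ge_0].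
  apply (Jlim_le_dist_Cauchy_compact alpha Ha (rhaly alpha) 0); [| lra |].
  - apply compact_op_Cauchy_compact; [exact Hc|]. intros; apply rhaly_sub.
  - apply op_sub_self_bounded, Hc.
Qed.

Section Jlim_zero.

Variable alpha : seqC.
Hypothesis alpha_l2 : l2 alpha.
Hypothesis Jlim_0 : Jlim alpha = Finite 0.

Lemma J_small d : 0 < d -> exists n x, J alpha n = Finite x /\ x < d.
Proof.
  intros Hd. apply NNPP. intros Hno.
  assert (Hle : Rbar_le (Finite d) (Jlim alpha)).
  { apply Jlim_glb. intros n. pose proof (J_ge_0 alpha n) as H0.
    destruct (J alpha n) as [x| |] eqn:E; [|exact I | contradiction].
    simpl. apply Rnot_lt_le. intros Hx. apply Hno. exists n, x. auto. }
  rewrite Jlim_0 in Hle. simpl in Hle. lra.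
Qed.

Lemma rhaly_l2 f : l2 f -> l2 (rhaly alpha f).
Proof.
  intros Hf. destruct (J_small 1) as [n [x [Hx _]]]; [lra|].
  apply (rhaly_sqnorm_le alpha alpha_l2 n x f Hx Hf).
Qed.

Variables (v : nat -> seqC) (B : R) (c : nat -> C).
Hypothesis v_bounded : forall j, l2 (v j) /\ sqnorm (v j) <= B ^ 2.
Hypothesis v_coord : forall k j, (2 * k + 1 <= j)%nat -> Cnorm2 (Cminus (v j k) (c k)) <= 2 * / INR (S j).

Definition rhaly_limit : seqC := fun k => Cmult (alpha k) (sum_n c k).

Lemma rhaly_limit_close K j : (2 * K + 1 <= j)%nat -> forall k, (k <= K)%nat ->
  Cnorm2 (Cminus (rhaly alpha (v j) k) (rhaly_limit k))
  <= Cnorm2 (alpha k) * (INR (S k) * INR (S k) * 2) * / INR (S j).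
Proof.
  intros HK k Hk. unfold rhaly, rhaly_limit.
  replace (Cminus (Cmult (alpha k) (sum_n (v j) k)) (Cmult (alpha k) (sum_n c k)))
    with (Cmult (alpha k) (sum_n (fun i => Cminus (v j i) (c i)) k))
    by (rewrite sum_n_Cminus; apply C_ext; simpl; ring).
  rewrite Cnorm2_mult, Rmult_assoc. apply Rmult_le_compat_l; [apply Cnorm2_ge_0|].
  eapply Rle_trans; [apply Cnorm2_sum_n_le|]. eapply Rle_trans; [apply Cauchy_Schwarz_count|].
  rewrite !Rmult_assoc. apply Rmult_le_compat_l; [apply pos_INR|].
  eapply Rle_trans; [apply (sum_n_le _ (fun _ => 2 * / INR (S j)))|].
  - intros i Hi. rewrite Cmod_pow2. apply v_coord. lia.
  - rewrite sum_n_const. right; ring.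
Qed.

Lemma coord_diff_head_le n N a b : (2 * n + 1 <= N)%nat -> (N <= a)%nat -> (N <= b)%nat ->
  sum_n (fun j => Cnorm2 (seq_sub (v a) (v b) j)) n <= INR (S n) * (8 * / INR (S N)).
Proof.
  intros HN Ha Hb. rewrite <- sum_n_const. apply sum_n_le. intros j Hj. unfold seq_sub.
  replace (Cminus (v a j) (v b j)) with (Cminus (Cminus (v a j) (c j)) (Cminus (v b j) (c j)))
    by (apply C_ext; simpl; ring).
  eapply Rle_trans; [apply Cnorm2_sub_le|].
  pose proof (v_coord j a ltac:(lia)); pose proof (v_coord j b ltac:(lia)).
  pose proof (Rinv_INR_S_le N a Ha); pose proof (Rinv_INR_S_le N b Hb). lra.
Qed.

Lemma rhaly_coordinatewise_Cauchy eps : 0 < eps -> exists N, forall a b, (N <= a)%nat -> (N <= b)%nat ->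
  sqnorm (seq_sub (rhaly alpha (v a)) (rhaly alpha (v b))) <= eps.
Proof.
  intros Heps. assert (HB2 : 0 <= B ^ 2) by apply pow2_ge_0.
  set (d := sqrt (eps / (64 * (B ^ 2 + 1)))).
  assert (Hd2 : d ^ 2 = eps / (64 * (B ^ 2 + 1))) by (apply pow2_sqrt, Rlt_le, Rdiv_lt_0_compat; lra).
  destruct (J_small d) as [n [x [Hx Hxd]]]; [apply sqrt_lt_R0, Rdiv_lt_0_compat; lra|].
  assert (Hx0 : 0 <= x) by (pose proof (J_ge_0 alpha n) as H; rewrite Hx in H; exact H).
  set (Na := sqnorm alpha). assert (HNa : 0 <= Na) by apply sqnorm_ge_0, alpha_l2.
  set (Sn := INR (S n)). assert (HSn : 0 <= Sn) by apply pos_INR.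
  destruct (INR_S_large (32 * (Na + 1) * Sn * Sn / eps)) as [N0 HN0].
  set (N := Nat.max N0 (2 * n + 1)). set (rho := / INR (S N)). exists N. intros a b Ha Hb.
  assert (Hrho : 0 < rho) by (apply Rinv_0_lt_compat, lt_0_INR; lia).
  set (h := seq_sub (v a) (v b)). rewrite <- rhaly_sub. fold h.
  assert (Hh : l2 h) by (apply l2_sub; apply v_bounded).
  assert (Hh2 : sqnorm h <= 4 * B ^ 2).
  { eapply Rle_trans; [apply (sqnorm_le2 h (v a) (v b) 2 2); try apply v_bounded; auto;
      intros; apply Cnorm2_sub_le|].
    pose proof (proj2 (v_bounded a)); pose proof (proj2 (v_bounded b)). lra. }
  pose proof (coord_diff_head_le n N a b ltac:(lia) Ha Hb) as Hhead. fold Sn rho h in Hhead.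
  destruct (rhaly_sqnorm_le alpha alpha_l2 n x h Hx Hh) as [_ Hle]. fold Na Sn in Hle.
  assert (Htail : 8 * x ^ 2 * sqnorm h <= eps / 2).
  { assert (x ^ 2 <= d ^ 2) by (apply pow_incr; lra).
    apply Rle_trans with (8 * d ^ 2 * (4 * B ^ 2)).
    - apply Rmult_le_compat; [nra | apply sqnorm_ge_0, Hh | nra | exact Hh2].
    - rewrite Hd2. apply Rmult_le_reg_r with (64 * (B ^ 2 + 1)); [lra|]. field_simplify; lra. }
  assert (Hhead' : 2 * Na * (Sn * sum_n (fun j => Cnorm2 (h j)) n) <= eps / 2).
  { apply Rle_trans with (2 * (Na + 1) * (Sn * (Sn * (8 * rho)))).
    - apply Rmult_le_compat; [nra | apply Rmult_le_pos; [lra | apply sum_n_nonneg; intros; apply Cnorm2_ge_0]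
        | lra | apply Rmult_le_compat_l; lra].
    - specialize (HN0 N ltac:(lia)).
      assert (Hprod : rho * INR (S N) = 1) by (unfold rho; field; apply Rgt_not_eq, lt_0_INR; lia).
      apply (Rmult_le_compat_l rho) in HN0; [|lra]. rewrite Hprod in HN0. unfold Rdiv in HN0.
      apply (Rmult_le_compat_r eps) in HN0; [|lra]. rewrite !Rmult_assoc, Rinv_l, Rmult_1_r in HN0 by lra.
      nra. }
  lra.
Qed.

Lemma rhaly_coordinatewise_limit eps : 0 < eps -> exists N, forall a, (N <= a)%nat ->
  l2 (seq_sub (rhaly alpha (v a)) rhaly_limit) /\
  sqnorm (seq_sub (rhaly alpha (v a)) rhaly_limit) <= 4 * eps.
Proof.
  intros Heps. destruct (rhaly_coordinatewise_Cauchy eps Heps) as [N HN]. exists N. intros a Ha.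
  apply l2_of_bounded_sum_n. intros K.
  set (W := sum_n (fun k => Cnorm2 (alpha k) * (INR (S k) * INR (S k) * 2)) K).
  assert (HW : 0 <= W).
  { apply sum_n_nonneg; intros; apply Rmult_le_pos; [apply Cnorm2_ge_0 | pose proof (pos_INR (S k)); nra]. }
  destruct (INR_S_large (W / eps)) as [N1 HN1].
  set (b := Nat.max N (Nat.max N1 (2 * K + 1))).
  assert (Hb : W * / INR (S b) <= eps).
  { specialize (HN1 b ltac:(unfold b; lia)). assert (0 < INR (S b)) by (apply lt_0_INR; lia).
    apply Rmult_le_reg_r with (INR (S b)); [lra|]. rewrite Rmult_assoc, Rinv_l, Rmult_1_r by lra.
    apply (Rmult_le_compat_l eps) in HN1; [|lra]. unfold Rdiv in HN1.
    rewrite <- Rmult_assoc, (Rmult_comm eps W), Rmult_assoc, Rinv_r, Rmult_1_r in HN1 by lra. lra. }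
  apply Rle_trans with (sum_n (fun k => 2 * Cnorm2 (seq_sub (rhaly alpha (v a)) (rhaly alpha (v b)) k) +
     2 * (/ INR (S b) * (Cnorm2 (alpha k) * (INR (S k) * INR (S k) * 2)))) K).
  { apply sum_n_le. intros k Hk. unfold seq_sub.
    replace (Cminus (rhaly alpha (v a) k) (rhaly_limit k)) with
      (Cplus (Cminus (rhaly alpha (v a) k) (rhaly alpha (v b) k))
             (Cminus (rhaly alpha (v b) k) (rhaly_limit k)))
      by (apply C_ext; simpl; ring).
    eapply Rle_trans; [apply Cnorm2_add_le|]. apply Rplus_le_compat_l.
    pose proof (rhaly_limit_close K b ltac:(unfold b; lia) k Hk). lra. }
  rewrite sum_n_plusR, !sum_n_scalR. fold W.
  assert (Hl2 : l2 (seq_sub (rhaly alpha (v a)) (rhaly alpha (v b))))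
    by (apply l2_sub; apply rhaly_l2, v_bounded).
  pose proof (sum_n_le_sqnorm _ K Hl2). pose proof (HN a b Ha ltac:(unfold b; lia)). lra.
Qed.

Lemma rhaly_coordinatewise_converges :
  exists g, l2 g /\ is_lim_seq (fun j => l2norm (seq_sub (rhaly alpha (v j)) g)) 0.
Proof.
  exists rhaly_limit. split.
  - destruct (rhaly_coordinatewise_limit 1) as [N HN]; [lra|]. destruct (HN N (le_n N)) as [Hl _].
    apply (l2_le2 _ (rhaly alpha (v N)) (seq_sub (rhaly alpha (v N)) rhaly_limit) 2);
      [|apply rhaly_l2, v_bounded | exact Hl].
    intros k. replace (rhaly_limit k) with
      (Cminus (rhaly alpha (v N) k) (seq_sub (rhaly alpha (v N)) rhaly_limit k))
      by (unfold seq_sub; apply C_ext; simpl; ring).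
    apply Cnorm2_sub_le.
  - apply is_lim_seq_spec. intros [e He]. simpl.
    destruct (rhaly_coordinatewise_limit (e * e / 16)) as [N HN]; [apply Rdiv_lt_0_compat; nra|].
    exists N. intros j Hj. destruct (HN j Hj) as [Hl Hb]. rewrite Rminus_0_r, Rabs_pos_eq by apply sqrt_pos.
    apply Rle_lt_trans with (e / 2); [|lra].
    apply l2norm_le_iff; [exact Hl | lra | nra].
Qed.

End Jlim_zero.

(* Interleaving real and imaginary parts, [x (2 k) j] and [x (2 k + 1) j] are the parts of [u j k]. *)
Lemma coordinatewise_subseq (u : nat -> seqC) B : (forall j, l2 (u j) /\ sqnorm (u j) <= B ^ 2) ->
  exists phi c, incr_seq phi /\
    forall k j, (2 * k + 1 <= j)%nat -> Cnorm2 (Cminus (u (phi j) k) (c k)) <= 2 * / INR (S j).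
Proof.
  intros Hu.
  set (x := fun i j => if Nat.even i then fst (u j (Nat.div2 i)) else snd (u j (Nat.div2 i))).
  destruct (diagonal_extraction x (fun _ => Rabs B)) as [phi [lim [Hphi Hlim]]].
  { intros i j. assert (Hmod : Cmod (u j (Nat.div2 i)) <= Rabs B).
    { rewrite <- (Rabs_pos_eq (Cmod _)) by apply Cmod_ge_0. apply Rsqr_le_abs_0. unfold Rsqr.
      replace (Cmod (u j (Nat.div2 i)) * Cmod (u j (Nat.div2 i))) with (Cmod (u j (Nat.div2 i)) ^ 2) by ring.
      rewrite Cmod_pow2. destruct (Hu j) as [Hl HN].
      eapply Rle_trans; [apply Cnorm2_le_sqnorm, Hl|]. simpl in HN. lra. }
    pose proof (Rmax_Cmod (u j (Nat.div2 i))). unfold x. destruct (Nat.even i).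
    - pose proof (Rmax_l (Rabs (fst (u j (Nat.div2 i)))) (Rabs (snd (u j (Nat.div2 i))))). lra.
    - pose proof (Rmax_r (Rabs (fst (u j (Nat.div2 i)))) (Rabs (snd (u j (Nat.div2 i))))). lra. }
  exists phi, (fun k => (lim (2 * k)%nat, lim (2 * k + 1)%nat)). split; [exact Hphi|].
  intros k j Hj. pose proof (Hlim (2 * k)%nat j ltac:(lia)) as Hre.
  pose proof (Hlim (2 * k + 1)%nat j Hj) as Him. unfold x in Hre, Him.
  rewrite Nat.even_even, Nat.div2_double in Hre.
  rewrite Nat.even_odd, Nat.add_1_r, Nat.div2_succ_double, <- Nat.add_1_r in Him.
  pose proof (Rinv_INR_S_le_1 j). pose proof (Rinv_0_lt_compat _ (lt_0_INR (S j) ltac:(lia))).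
  apply pow_maj_Rabs with (n := 2%nat) in Hre, Him.
  unfold Cnorm2, Cminus, Copp, Cplus; simpl in *. nra.
Qed.

Lemma Jlim_0_compact alpha : l2 alpha -> Jlim alpha = Finite 0 -> compact_op (rhaly alpha).
Proof.
  intros Ha HJ. split; [apply rhaly_l2; assumption|]. intros u B Hu.
  assert (HB : 0 <= B) by (eapply Rle_trans; [apply sqrt_pos | apply (proj2 (Hu 0%nat))]).
  assert (Hu2 : forall j, l2 (u j) /\ sqnorm (u j) <= B ^ 2).
  { intros j. destruct (Hu j) as [Hl Hn]. split; [exact Hl|]. apply l2norm_le_iff; auto. }
  destruct (coordinatewise_subseq u B Hu2) as [phi [c [Hphi Hc]]].
  destruct (rhaly_coordinatewise_converges alpha Ha HJ (fun j => u (phi j)) B c (fun j => Hu2 (phi j)) Hc)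
    as [g [Hg Hlim]].
  exists phi, g. auto.
Qed.

Lemma Jlim_le_ess_norm_rhaly alpha : l2 alpha -> Rbar_le (Jlim alpha) (ess_norm (rhaly alpha)).
Proof.
  intros Ha. apply ess_norm_glb. intros P M HP HM.
  apply (Jlim_le_dist_Cauchy_compact alpha Ha P M); [apply finite_rank_Cauchy_compact, HP | |exact HM].
  eapply op_bounded_by_ge_0; eassumption.
Qed.

Theorem theorem2p6 (alpha : nat -> C) (Halpha : l2 alpha) :
  Rbar_le (Jlim alpha) (ess_norm (rhaly alpha)) /\
  Rbar_le (ess_norm (rhaly alpha)) (Rbar_mult (Finite (2 * sqrt 2)) (Jlim alpha)) /\
  (compact_op (rhaly alpha) <-> Jlim alpha = Finite 0).
Proof.
  split; [apply Jlim_le_ess_norm_rhaly, Halpha|]. split.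
  - eapply Rbar_le_trans; [apply ess_norm_rhaly_le_Jlim, Halpha|].
    apply Rbar_mult_le_compat_scal; [|apply Jlim_ge_0].
    pose proof (sqrt_le_1_alt 1 2 ltac:(lra)). rewrite sqrt_1 in H. lra.
  - split; [apply compact_rhaly_Jlim, Halpha | apply Jlim_0_compact, Halpha].
Qed.
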